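(* For every fixed $\alpha>0$, the functions $(x,y)\mapsto\theta_{(x,y)}(b(x,y);\alpha)$ and $(x,y)\mapsto\widehat\theta_{(x,y)}(b(x,y);\alpha)$ (defined for $x\in\mathbb{R}$, $y>0$) have vanishing gradient at $(x,y)=(1/2,\sqrt3/2)$.
   Context: For $y>0$, $c=(c_1,c_2)\in\mathbb{R}^2$, $\alpha>0$: $\theta_{(x,y)}(c;\alpha)=\sum_{k,l\in\mathbb{Z}}\exp(-\tfrac{\pi\alpha}{y}((k+c_1)^2+2x(k+c_1)(l+c_2)+(x^2+y^2)(l+c_2)^2))$ and $\widehat\theta_{(x,y)}(c;\alpha)=\sum_{k,l\in\mathbb{Z}}\exp(-\tfrac{\pi\alpha}{y}(k^2+2xkl+(x^2+y^2)l^2))e^{2\pi i(kc_2-lc_1)}$. $b(x,y)=(b_1,b_2)$ with $b_1=\frac{x+(1-x)4y^2}{8y^2}$, $b_2=\frac{4y^2-1}{8y^2}$. *)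

From Stdlib Require Import Reals ZArith.
From Coquelicot Require Import Coquelicot.
Open Scope R_scope.

(* Sum over Z of f : Z -> R, as sum over n >= 0 of f n plus sum over n >= 1 of f (-n).
   (All sums used below are absolutely convergent, so this is the usual sum over Z.) *)
Definition sumZ (f : Z -> R) : R :=
  Series (fun n : nat => f (Z.of_nat n)) + Series (fun n : nat => f (- Z.of_nat (S n))%Z).

Definition sumZ2 (f : Z -> Z -> R) : R := sumZ (fun k => sumZ (fun l => f k l)).

Definition theta (x y c1 c2 alpha : R) : R :=
  sumZ2 (fun k l =>
    exp (- (PI * alpha / y) *
      ((IZR k + c1) ^ 2 + 2 * x * (IZR k + c1) * (IZR l + c2)
       + (x ^ 2 + y ^ 2) * (IZR l + c2) ^ 2))).

Definition gaussw (x y alpha : R) (k l : Z) : R :=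
  exp (- (PI * alpha / y) *
    (IZR k ^ 2 + 2 * x * IZR k * IZR l + (x ^ 2 + y ^ 2) * IZR l ^ 2)).

(* hat theta_{(x,y)}(c;alpha) : complex valued; e^{2 pi i t} = cos(2 pi t) + i sin(2 pi t),
   real and imaginary parts summed separately. *)
Definition thetahat (x y c1 c2 alpha : R) : C :=
  (sumZ2 (fun k l => gaussw x y alpha k l * cos (2 * PI * (IZR k * c2 - IZR l * c1))),
   sumZ2 (fun k l => gaussw x y alpha k l * sin (2 * PI * (IZR k * c2 - IZR l * c1)))).

Definition b1 (x y : R) : R := (x + (1 - x) * 4 * y ^ 2) / (8 * y ^ 2).
Definition b2 (x y : R) : R := (4 * y ^ 2 - 1) / (8 * y ^ 2).

Definition Theta_b (alpha x y : R) : R := theta x y (b1 x y) (b2 x y) alpha.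
Definition ThetaHat_b (alpha x y : R) : C := thetahat x y (b1 x y) (b2 x y) alpha.

From Stdlib Require Import Reals ZArith Lra Lia.
From Coquelicot Require Import Coquelicot.
Open Scope R_scope.

(* Along each of the four coordinate lines through that point the function is a lattice sum
     sum_{(k,l) in Z^2} exp(-P(k,l,u)) psi(p(k,l,u)),
   where P and p are quadratic in (k,l) with coefficients smooth in the coordinate u, and
   psi is 1 (theta) or cos, sin (real and imaginary parts of hat-theta). Sums over Z^2 of functions dominated by C exp(-d(|k|+|l|)) converge, can be
     summed in either order (Fubini) and reindexed by affine maps, and can be differentiated
     termwise when the second u-derivatives are uniformly dominated (Taylor's inequality).
     For the Gaussian-type summands this domination follows from the positive definiteness
     of the quadratic part of P at the base point.
   - Symmetry. At the hexagonal point the exponent is a multiple of k^2+kl+l^2 (+ k + l for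
     theta) and the phase is 2 pi (k - l)/3 modulo 2 pi. Both are invariant under a
     dihedral group of order 6 of affine bijections of Z^2, and the u-derivatives of
     exponent and phase sum to zero over each orbit, so the termwise derivative vanishes. *)

(* exp (d n) = (exp d)^n: exponential decay in |k| is geometric decay. *)
Lemma exp_mult_INR (d : R) (n : nat) : exp (d * INR n) = exp d ^ n.
Proof.
  induction n as [|n IH]; simpl.
  - rewrite Rmult_0_r; apply exp_0.
  - rewrite <- IH, <- exp_plus. f_equal. destruct n; simpl; ring.
Qed.

Lemma exp_le_mono (a b : R) : a <= b -> exp a <= exp b.
Proof. intros [H|H]; [left; apply exp_increasing; auto | subst; lra]. Qed.

Section GeometricMajorant.
Variables (a : nat -> R) (C q : R).
Hypothesis Hq : 0 <= q < 1.
Hypothesis Ha : forall n, Rabs (a n) <= C * q ^ n.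

Lemma ex_series_geom_scal : ex_series (fun n => C * q ^ n).
Proof.
  apply (ex_series_scal_l C (fun n => q ^ n)), ex_series_geom.
  rewrite Rabs_pos_eq; lra.
Qed.

Lemma ex_series_geom_dominated : ex_series (fun n => Rabs (a n)) /\ ex_series a.
Proof.
  assert (Habs : ex_series (fun n => Rabs (a n))).
  { apply (ex_series_le (fun n => Rabs (a n)) (fun n => C * q ^ n)); [|exact ex_series_geom_scal].
    intro n. unfold norm; simpl. unfold abs; simpl. rewrite Rabs_Rabsolu. apply Ha. }
  split; [exact Habs | exact (ex_series_Rabs _ Habs)].
Qed.

Lemma Series_geom_dominated : Rabs (Series a) <= C / (1 - q).
Proof.
  destruct ex_series_geom_dominated as [Habs _].
  eapply Rle_trans; [apply Series_Rabs, Habs|].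
  replace (C / (1 - q)) with (Series (fun n => C * q ^ n)).
  - apply Series_le; [|exact ex_series_geom_scal].
    intro n; split; [apply Rabs_pos | apply Ha].
  - rewrite Series_scal_l, Series_geom by (rewrite Rabs_pos_eq; lra).
    unfold Rdiv; ring.
Qed.

End GeometricMajorant.

Lemma Series_geom_dominated_tail (a : nat -> R) (C q : R) N :
  0 <= q < 1 -> (forall n, Rabs (a n) <= C * q ^ n) ->
  Rabs (Series a - sum_f_R0 a N) <= C * q ^ S N / (1 - q).
Proof.
  intros Hq Ha. destruct (ex_series_geom_dominated a C q Hq Ha) as [_ Hex].
  rewrite (Series_incr_n a (S N)); [|lia|exact Hex]. simpl Init.Nat.pred.
  replace (sum_f_R0 a N + Series (fun k => a (S N + k)%nat) - sum_f_R0 a N)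
    with (Series (fun k => a (S N + k)%nat)) by ring.
  apply (Series_geom_dominated _ (C * q ^ S N) q Hq).
  intro n. rewrite Rmult_assoc, <- pow_add. apply Ha.
Qed.

Lemma geom_bound_zero (x K q : R) :
  0 <= q < 1 -> (forall N, Rabs x <= K * q ^ S N) -> x = 0.
Proof.
  intros Hq H.
  assert (Hlim : is_lim_seq (fun N => K * q ^ S N) 0).
  { replace (Finite 0) with (Rbar_mult K 0) by (simpl; f_equal; ring).
    apply is_lim_seq_scal_l. apply (is_lim_seq_incr_1 (fun n => q ^ n)).
    apply is_lim_seq_geom. rewrite Rabs_pos_eq; lra. }
  pose proof (is_lim_seq_le _ _ _ _ H (is_lim_seq_const (Rabs x)) Hlim) as Hle.
  simpl in Hle. pose proof (Rabs_pos x).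
  destruct (Req_dec x 0) as [|Hx]; [auto|].
  pose proof (Rabs_pos_lt x Hx). lra.
Qed.

Definition zmajorant (C d : R) (k : Z) : R := C * exp (- d * Rabs (IZR k)).

Lemma Rabs_IZR_of_nat n : Rabs (IZR (Z.of_nat n)) = INR n.
Proof. rewrite <- INR_IZR_INZ. apply Rabs_pos_eq, pos_INR. Qed.

Lemma Rabs_IZR_opp_of_nat n : Rabs (IZR (- Z.of_nat n)) = INR n.
Proof. rewrite opp_IZR, Rabs_Ropp. apply Rabs_IZR_of_nat. Qed.

Lemma exp_opp_lt_1 d : 0 < d -> 0 <= exp (- d) < 1.
Proof.
  intros Hd. split; [left; apply exp_pos|].
  rewrite <- exp_0. apply exp_increasing. lra.
Qed.

(* Sums over Z of a function g with |g k| <= C e^(-d|k|): both halves are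
   dominated by the geometric sequence C q^n with q = e^(-d). *)
Section SumZ.
Variables (g : Z -> R) (C d : R).
Hypothesis Hd : 0 < d.
Hypothesis Hg : forall k, Rabs (g k) <= zmajorant C d k.

Let q := exp (- d).

Lemma zmajorant_nonneg : 0 <= C.
Proof.
  pose proof (Hg 0%Z) as H0. unfold zmajorant in H0.
  pose proof (Rabs_pos (g 0%Z)). pose proof (exp_pos (- d * Rabs (IZR 0))). nra.
Qed.

Lemma pos_half_bound n : Rabs (g (Z.of_nat n)) <= C * q ^ n.
Proof. unfold q. rewrite <- exp_mult_INR, <- Rabs_IZR_of_nat. apply Hg. Qed.

Lemma mirror_half_bound n : Rabs (g (- Z.of_nat n)) <= C * q ^ n.
Proof. unfold q. rewrite <- exp_mult_INR, <- (Rabs_IZR_opp_of_nat n). apply Hg. Qed.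

Lemma neg_half_bound n : Rabs (g (- Z.of_nat (S n))) <= (C * q) * q ^ n.
Proof. rewrite Rmult_assoc. apply mirror_half_bound. Qed.

Lemma summable_pos_half : ex_series (fun n => g (Z.of_nat n)).
Proof. exact (proj2 (ex_series_geom_dominated _ _ _ (exp_opp_lt_1 d Hd) pos_half_bound)). Qed.

Lemma summable_mirror_half : ex_series (fun n => g (- Z.of_nat n)).
Proof. exact (proj2 (ex_series_geom_dominated _ _ _ (exp_opp_lt_1 d Hd) mirror_half_bound)). Qed.

Lemma summable_neg_half : ex_series (fun n => g (- Z.of_nat (S n))).
Proof. exact (proj2 (ex_series_geom_dominated _ _ _ (exp_opp_lt_1 d Hd) neg_half_bound)). Qed.

Lemma sumZ_bound : Rabs (sumZ g) <= 2 * C / (1 - q).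
Proof.
  pose proof (exp_opp_lt_1 d Hd) as Hq. fold q in Hq. pose proof zmajorant_nonneg.
  unfold sumZ. eapply Rle_trans; [apply Rabs_triang|].
  pose proof (Series_geom_dominated _ _ _ Hq pos_half_bound).
  pose proof (Series_geom_dominated _ _ _ Hq neg_half_bound).
  assert (C * q / (1 - q) <= C / (1 - q)).
  { unfold Rdiv. apply Rmult_le_compat_r; [left; apply Rinv_0_lt_compat; lra | nra]. }
  replace (2 * C / (1 - q)) with (C / (1 - q) + C / (1 - q)) by (field; lra). lra.
Qed.

(* Symmetric partial sums over -N-1 <= k <= N. *)
Definition sumZ_partial (f : Z -> R) (N : nat) : R :=
  sum_f_R0 (fun n => f (Z.of_nat n)) N + sum_f_R0 (fun n => f (- Z.of_nat (S n))%Z) N.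

Lemma sumZ_partial_tail N : Rabs (sumZ g - sumZ_partial g N) <= 2 * C * q ^ S N / (1 - q).
Proof.
  pose proof (exp_opp_lt_1 d Hd) as Hq. fold q in Hq. pose proof zmajorant_nonneg.
  unfold sumZ, sumZ_partial.
  pose proof (Series_geom_dominated_tail _ _ _ N Hq pos_half_bound).
  pose proof (Series_geom_dominated_tail _ _ _ N Hq neg_half_bound).
  match goal with |- Rabs (?a + ?b - (?c + ?e)) <= _ =>
    replace (a + b - (c + e)) with ((a - c) + (b - e)) by ring end.
  eapply Rle_trans; [apply Rabs_triang|].
  assert (C * q * q ^ S N / (1 - q) <= C * q ^ S N / (1 - q)).
  { unfold Rdiv. apply Rmult_le_compat_r; [left; apply Rinv_0_lt_compat; lra|].
    assert (0 <= C * q ^ S N) by (apply Rmult_le_pos; [|apply pow_le]; lra). nra. }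
  replace (2 * C * q ^ S N / (1 - q)) with (C * q ^ S N / (1 - q) + C * q ^ S N / (1 - q))
    by (field; lra). lra.
Qed.

Lemma sumZ_partial_bound N : Rabs (sumZ_partial g N) <= 4 * C / (1 - q).
Proof.
  pose proof (exp_opp_lt_1 d Hd) as Hq. fold q in Hq. pose proof zmajorant_nonneg.
  pose proof sumZ_bound. pose proof (sumZ_partial_tail N).
  pose proof (Rabs_triang (sumZ g) (- (sumZ g - sumZ_partial g N))) as T.
  rewrite Rabs_Ropp in T. replace (sumZ g + - (sumZ g - sumZ_partial g N)) with (sumZ_partial g N) in T by ring.
  assert (2 * C * q ^ S N / (1 - q) <= 2 * C / (1 - q)).
  { unfold Rdiv. apply Rmult_le_compat_r; [left; apply Rinv_0_lt_compat; lra|].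
    assert (q ^ S N <= 1) by (rewrite <- (pow1 (S N)); apply pow_incr; lra). nra. }
  replace (4 * C / (1 - q)) with (2 * C / (1 - q) + 2 * C / (1 - q)) by (field; lra). lra.
Qed.

Lemma sumZ_shift1 : sumZ (fun k => g (k + 1)%Z) = sumZ g.
Proof.
  unfold sumZ.
  rewrite (Series_ext (fun n => g (Z.of_nat n + 1)%Z) (fun n => g (Z.of_nat (S n))))
    by (intro n; f_equal; lia).
  rewrite (Series_ext (fun n => g (- Z.of_nat (S n) + 1)%Z) (fun n => g (- Z.of_nat n)%Z))
    by (intro n; f_equal; lia).
  rewrite (Series_incr_1 (fun n => g (Z.of_nat n))) by apply summable_pos_half.
  rewrite (Series_incr_1 (fun n => g (- Z.of_nat n)%Z)) by apply summable_mirror_half.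
  simpl. ring.
Qed.

Lemma sumZ_opp : sumZ (fun k => g (- k)%Z) = sumZ g.
Proof.
  unfold sumZ.
  rewrite (Series_ext (fun n => g (- - Z.of_nat (S n))%Z) (fun n => g (Z.of_nat (S n))))
    by (intro n; f_equal; lia).
  rewrite (Series_incr_1 (fun n => g (Z.of_nat n))) by apply summable_pos_half.
  rewrite (Series_incr_1 (fun n => g (- Z.of_nat n)%Z)) by apply summable_mirror_half.
  simpl. ring.
Qed.

End SumZ.

Lemma sumZ_ext f g : (forall k, f k = g k) -> sumZ f = sumZ g.
Proof.
  intros H. unfold sumZ.
  rewrite (Series_ext _ _ (fun n => H _)), (Series_ext _ _ (fun n => H _)). reflexivity.
Qed.

Lemma sumZ_scal c f : sumZ (fun k => c * f k) = c * sumZ f.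
Proof. unfold sumZ. rewrite !Series_scal_l. ring. Qed.

Lemma sumZ_plus f g Cf df Cg dg : 0 < df -> 0 < dg ->
  (forall k, Rabs (f k) <= zmajorant Cf df k) -> (forall k, Rabs (g k) <= zmajorant Cg dg k) ->
  sumZ (fun k => f k + g k) = sumZ f + sumZ g.
Proof.
  intros Hf Hg Bf Bg. unfold sumZ.
  rewrite (Series_plus (fun n => f (Z.of_nat n)) (fun n => g (Z.of_nat n)))
    by first [exact (summable_pos_half f Cf df Hf Bf) | exact (summable_pos_half g Cg dg Hg Bg)].
  rewrite (Series_plus (fun n => f (- Z.of_nat (S n))%Z) (fun n => g (- Z.of_nat (S n))%Z))
    by first [exact (summable_neg_half f Cf df Hf Bf) | exact (summable_neg_half g Cg dg Hg Bg)].
  ring.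
Qed.

Lemma zmajorant_shift g C d c : 0 < d -> (forall k, Rabs (g k) <= zmajorant C d k) ->
  forall k, Rabs (g (k + c)%Z) <= zmajorant (C * exp (d * Rabs (IZR c))) d k.
Proof.
  intros Hd H k. eapply Rle_trans; [apply H|]. unfold zmajorant.
  pose proof (zmajorant_nonneg g C d H).
  rewrite Rmult_assoc, <- exp_plus. apply Rmult_le_compat_l; auto.
  apply exp_le_mono. rewrite plus_IZR.
  pose proof (Rabs_triang (IZR k + IZR c) (- IZR c)) as T. rewrite Rabs_Ropp in T.
  replace (IZR k + IZR c + - IZR c) with (IZR k) in T by ring.
  assert (d * Rabs (IZR k) <= d * Rabs (IZR k + IZR c) + d * Rabs (IZR c))
    by (rewrite <- Rmult_plus_distr_l; apply Rmult_le_compat_l; lra).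
  lra.
Qed.

Lemma sumZ_shift g C d c : 0 < d -> (forall k, Rabs (g k) <= zmajorant C d k) ->
  sumZ (fun k => g (k + c)%Z) = sumZ g.
Proof.
  intros Hd H.
  assert (Hn : forall n, sumZ (fun k => g (k + Z.of_nat n)%Z) = sumZ g
                      /\ sumZ (fun k => g (k - Z.of_nat n)%Z) = sumZ g).
  { induction n as [|n [IH1 IH2]].
    - split; apply sumZ_ext; intro k; f_equal; lia.
    - split.
      + rewrite <- IH1.
        rewrite <- (sumZ_shift1 (fun k => g (k + Z.of_nat n)%Z) _ d Hd (zmajorant_shift g C d _ Hd H)).
        apply sumZ_ext; intro k; f_equal; lia.
      + rewrite <- IH2.
        rewrite <- (sumZ_shift1 (fun k => g (k - Z.of_nat (S n))%Z) _ d Hd (zmajorant_shift g C d _ Hd H)).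
        apply sumZ_ext; intro k; f_equal; lia. }
  destruct (Z_le_gt_dec 0 c).
  - rewrite <- (proj1 (Hn (Z.to_nat c))). apply sumZ_ext; intro k; f_equal; lia.
  - rewrite <- (proj2 (Hn (Z.to_nat (- c)))). apply sumZ_ext; intro k; f_equal; lia.
Qed.

Lemma sumZ_reflect g C d c : 0 < d -> (forall k, Rabs (g k) <= zmajorant C d k) ->
  sumZ (fun k => g (c - k)%Z) = sumZ g.
Proof.
  intros Hd H.
  rewrite <- (sumZ_shift g C d c Hd H).
  rewrite <- (sumZ_opp _ _ d Hd (zmajorant_shift g C d c Hd H)).
  apply sumZ_ext; intro k; f_equal; lia.
Qed.

Definition zmajorant2 (C d : R) (k l : Z) : R := C * exp (- d * (Rabs (IZR k) + Rabs (IZR l))).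

Definition Dominated (h : Z -> Z -> R) : Prop :=
  exists C d, 0 < d /\ forall k l, Rabs (h k l) <= zmajorant2 C d k l.

Definition sumZ2_partial (h : Z -> Z -> R) (N : nat) : R :=
  sumZ_partial (fun k => sumZ_partial (h k) N) N.

Section SumZ2.
Variables (h : Z -> Z -> R) (C d : R).
Hypothesis Hd : 0 < d.
Hypothesis Hh : forall k l, Rabs (h k l) <= zmajorant2 C d k l.

Let q := exp (- d).

Lemma row_bound k l : Rabs (h k l) <= zmajorant (C * exp (- d * Rabs (IZR k))) d l.
Proof.
  eapply Rle_trans; [apply Hh|]. unfold zmajorant2, zmajorant.
  rewrite Rmult_assoc, <- exp_plus. right; f_equal; f_equal; ring.
Qed.

Lemma zmajorant2_nonneg : 0 <= C.
Proof.
  pose proof (zmajorant_nonneg _ _ _ (row_bound 0%Z)).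
  pose proof (exp_pos (- d * Rabs (IZR 0))). nra.
Qed.

Lemma inner_sum_bound k : Rabs (sumZ (h k)) <= zmajorant (2 * C / (1 - q)) d k.
Proof.
  pose proof (exp_opp_lt_1 d Hd) as Hq. fold q in Hq.
  eapply Rle_trans; [apply (sumZ_bound (h k) _ d Hd (row_bound k))|].
  unfold zmajorant. fold q. right. field. lra.
Qed.

Lemma sumZ2_bound : Rabs (sumZ2 h) <= 2 * (2 * C / (1 - q)) / (1 - q).
Proof. exact (sumZ_bound _ _ d Hd inner_sum_bound). Qed.

Lemma sumZ2_partial_tail :
  exists K, forall N, Rabs (sumZ2 h - sumZ2_partial h N) <= K * q ^ S N.
Proof.
  pose proof (exp_opp_lt_1 d Hd) as Hq. fold q in Hq.
  exists (12 * C / ((1 - q) * (1 - q))). intro N.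
  unfold sumZ2, sumZ2_partial.
  set (I := fun k => sumZ (h k)).
  assert (Hrow : forall k, Rabs (I k - sumZ_partial (h k) N)
                           <= zmajorant (2 * C * q ^ S N / (1 - q)) d k).
  { intro k. eapply Rle_trans; [apply (sumZ_partial_tail (h k) _ d Hd (row_bound k) N)|].
    unfold zmajorant. fold q. right. field. lra. }
  pose proof (sumZ_partial_tail I _ d Hd inner_sum_bound N) as T1.
  pose proof (sumZ_partial_bound _ _ d Hd Hrow N) as T2. fold q in T1, T2.
  replace (sumZ I - sumZ_partial (fun k => sumZ_partial (h k) N) N) with
    ((sumZ I - sumZ_partial I N) + sumZ_partial (fun k => I k - sumZ_partial (h k) N) N)
    by (unfold sumZ_partial; rewrite !minus_sum; ring).
  eapply Rle_trans; [apply Rabs_triang|].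
  replace (12 * C / ((1 - q) * (1 - q)) * q ^ S N) with
    (2 * (2 * C / (1 - q)) * q ^ S N / (1 - q) + 4 * (2 * C * q ^ S N / (1 - q)) / (1 - q))
    by (field; lra).
  lra.
Qed.

End SumZ2.

Lemma sum_f_R0_ext (a b : nat -> R) N : (forall n, a n = b n) -> sum_f_R0 a N = sum_f_R0 b N.
Proof. intros H; induction N; simpl; rewrite ?IHN, ?H; reflexivity. Qed.

Lemma sum_f_R0_switch (u : nat -> nat -> R) N :
  sum_f_R0 (fun i => sum_f_R0 (u i) N) N = sum_f_R0 (fun j => sum_f_R0 (fun i => u i j) N) N.
Proof.
  rewrite <- sum_n_Reals.
  rewrite (sum_n_ext _ (fun i => sum_n (u i) N)) by (intro; rewrite sum_n_Reals; auto).
  rewrite sum_n_switch, sum_n_Reals. apply sum_f_R0_ext. intro; rewrite sum_n_Reals; auto.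
Qed.

Lemma sumZ2_partial_swap h N : sumZ2_partial (fun k l => h l k) N = sumZ2_partial h N.
Proof.
  set (pt := fun n => Z.of_nat n). set (mt := fun n => (- Z.of_nat (S n))%Z).
  assert (Halt : forall g, sumZ_partial g N = sum_f_R0 (fun n => g (pt n) + g (mt n)) N)
    by (intro; unfold sumZ_partial; rewrite plus_sum; reflexivity).
  unfold sumZ2_partial. rewrite !Halt.
  rewrite (sum_f_R0_ext _ (fun i => sum_f_R0 (fun j => h (pt j) (pt i) + h (mt j) (pt i)
                                          + (h (pt j) (mt i) + h (mt j) (mt i))) N)).
  2: { intro n. rewrite !Halt, <- plus_sum. apply sum_f_R0_ext. intro; ring. }
  rewrite sum_f_R0_switch. apply sum_f_R0_ext. intro n.
  rewrite !Halt, <- plus_sum. apply sum_f_R0_ext. intro; ring.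
Qed.

Lemma sumZ2_swap h : Dominated h -> sumZ2 (fun k l => h l k) = sumZ2 h.
Proof.
  intros [C [d [Hd Hh]]].
  assert (Hh' : forall k l, Rabs (h l k) <= zmajorant2 C d k l).
  { intros k l. eapply Rle_trans; [apply Hh|]. unfold zmajorant2. rewrite (Rplus_comm (Rabs (IZR l))). lra. }
  destruct (sumZ2_partial_tail h C d Hd Hh) as [K1 T1].
  destruct (sumZ2_partial_tail _ C d Hd Hh') as [K2 T2].
  apply Rminus_diag_uniq, (geom_bound_zero _ (K1 + K2) (exp (- d)) (exp_opp_lt_1 d Hd)).
  intro N. specialize (T1 N). specialize (T2 N). rewrite sumZ2_partial_swap in T2.
  replace (sumZ2 (fun k l => h l k) - sumZ2 h) with
    ((sumZ2 (fun k l => h l k) - sumZ2_partial h N) - (sumZ2 h - sumZ2_partial h N)) by ring.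
  eapply Rle_trans; [apply Rabs_triang|]. rewrite Rabs_Ropp. lra.
Qed.

Lemma sumZ2_ext f g : (forall k l, f k l = g k l) -> sumZ2 f = sumZ2 g.
Proof. intros H. apply sumZ_ext. intro k. apply sumZ_ext, H. Qed.

Lemma zmajorant2_weaken C d d' k l : 0 <= C -> d' <= d -> zmajorant2 C d k l <= zmajorant2 C d' k l.
Proof.
  intros HC Hd. apply Rmult_le_compat_l; [exact HC|]. apply exp_le_mono.
  pose proof (Rabs_pos (IZR k)); pose proof (Rabs_pos (IZR l)). nra.
Qed.

Lemma Dominated_plus f g : Dominated f -> Dominated g -> Dominated (fun k l => f k l + g k l).
Proof.
  intros [C1 [d1 [H1 B1]]] [C2 [d2 [H2 B2]]].
  exists (C1 + C2), (Rmin d1 d2). split; [apply Rmin_glb_lt; auto|].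
  intros k l. eapply Rle_trans; [apply Rabs_triang|].
  pose proof (zmajorant2_weaken C1 d1 (Rmin d1 d2) k l (zmajorant2_nonneg f C1 d1 B1) (Rmin_l _ _)).
  pose proof (zmajorant2_weaken C2 d2 (Rmin d1 d2) k l (zmajorant2_nonneg g C2 d2 B2) (Rmin_r _ _)).
  specialize (B1 k l). specialize (B2 k l). unfold zmajorant2 in *. lra.
Qed.

Lemma Dominated_scal c f : Dominated f -> Dominated (fun k l => c * f k l).
Proof.
  intros [C [d [H B]]]. exists (Rabs c * C), d. split; [exact H|]. intros k l.
  rewrite Rabs_mult. unfold zmajorant2. rewrite Rmult_assoc.
  apply Rmult_le_compat_l; [apply Rabs_pos | apply B].
Qed.

Lemma Dominated_minus f g : Dominated f -> Dominated g -> Dominated (fun k l => f k l - g k l).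
Proof.
  intros Hf Hg. destruct (Dominated_plus _ _ Hf (Dominated_scal (-1) _ Hg)) as [C [d [H B]]].
  exists C, d; split; [exact H|]. intros k l. specialize (B k l).
  replace (f k l - g k l) with (f k l + -1 * g k l) by ring. exact B.
Qed.

Lemma Dominated_reindex f (p r : Z -> Z -> Z) (A B : R) : 0 < A ->
  (forall k l, Rabs (IZR k) + Rabs (IZR l) <= A * (Rabs (IZR (p k l)) + Rabs (IZR (r k l))) + B) ->
  Dominated f -> Dominated (fun k l => f (p k l) (r k l)).
Proof.
  intros HA Hm [C [d [H Bf]]]. exists (C * exp (d * B / A)), (d / A).
  split; [apply Rdiv_lt_0_compat; auto|].
  intros k l. eapply Rle_trans; [apply Bf|]. pose proof (zmajorant2_nonneg f C d Bf).
  unfold zmajorant2. rewrite Rmult_assoc, <- exp_plus.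
  apply Rmult_le_compat_l; [assumption|]. apply exp_le_mono.
  specialize (Hm k l).
  apply (Rmult_le_compat_l (d / A)) in Hm; [|left; apply Rdiv_lt_0_compat; auto].
  replace (d / A * (A * (Rabs (IZR (p k l)) + Rabs (IZR (r k l))) + B)) with
    (d * (Rabs (IZR (p k l)) + Rabs (IZR (r k l))) + d * B / A) in Hm by (field; lra).
  lra.
Qed.

Lemma sumZ2_plus f g : Dominated f -> Dominated g ->
  sumZ2 (fun k l => f k l + g k l) = sumZ2 f + sumZ2 g.
Proof.
  intros [C1 [d1 [H1 B1]]] [C2 [d2 [H2 B2]]]. unfold sumZ2.
  rewrite (sumZ_ext _ (fun k => sumZ (f k) + sumZ (g k))).
  - exact (sumZ_plus _ _ _ d1 _ d2 H1 H2 (inner_sum_bound f C1 d1 H1 B1) (inner_sum_bound g C2 d2 H2 B2)).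
  - intro k. exact (sumZ_plus _ _ _ d1 _ d2 H1 H2 (row_bound f C1 d1 B1 k) (row_bound g C2 d2 B2 k)).
Qed.

Lemma sumZ2_scal c f : sumZ2 (fun k l => c * f k l) = c * sumZ2 f.
Proof. unfold sumZ2. rewrite <- sumZ_scal. apply sumZ_ext. intro k. apply sumZ_scal. Qed.

Lemma sumZ2_minus f g : Dominated f -> Dominated g ->
  sumZ2 (fun k l => f k l - g k l) = sumZ2 f - sumZ2 g.
Proof.
  intros Hf Hg. rewrite (sumZ2_ext _ (fun k l => f k l + (-1) * g k l)) by (intros; ring).
  rewrite sumZ2_plus, sumZ2_scal; [ring | exact Hf | apply Dominated_scal, Hg].
Qed.

Lemma sumZ2_inner_reflect f (c : Z -> Z) : Dominated f -> sumZ2 (fun k l => f k (c k - l)%Z) = sumZ2 f.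
Proof.
  intros [C [d [H B]]]. apply sumZ_ext. intro k.
  exact (sumZ_reflect (f k) _ d (c k) H (row_bound f C d B k)).
Qed.

Lemma sumZ2_inner_shift f (c : Z -> Z) : Dominated f -> sumZ2 (fun k l => f k (l + c k)%Z) = sumZ2 f.
Proof.
  intros [C [d [H B]]]. apply sumZ_ext. intro k.
  exact (sumZ_shift (f k) _ d (c k) H (row_bound f C d B k)).
Qed.

Lemma sumZ2_outer_opp f : Dominated f -> sumZ2 (fun k l => f (- k)%Z l) = sumZ2 f.
Proof. intros [C [d [H B]]]. exact (sumZ_opp (fun k => sumZ (f k)) _ d H (inner_sum_bound f C d H B)). Qed.

Definition sum_symmetry (t : (Z -> Z -> R) -> (Z -> Z -> R)) : Prop :=
  forall S, Dominated S -> Dominated (t S) /\ sumZ2 (t S) = sumZ2 S.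

Lemma sumZ2_orbit_zero s r S : sum_symmetry s -> sum_symmetry r -> Dominated S ->
  (forall k l, S k l + s S k l + r S k l + r (s S) k l + s (r S) k l + s (r (s S)) k l = 0) ->
  sumZ2 S = 0.
Proof.
  intros Hs Hr G Horbit.
  destruct (Hs S G) as [Gs Es]. destruct (Hr S G) as [Gr Er].
  destruct (Hr _ Gs) as [Grs Ers]. destruct (Hs _ Gr) as [Gsr Esr].
  destruct (Hs _ Grs) as [Gsrs Esrs].
  assert (Htot : sumZ2 (fun k l => S k l + s S k l + r S k l + r (s S) k l + s (r S) k l
                                   + s (r (s S)) k l) = 6 * sumZ2 S).
  { rewrite !sumZ2_plus; repeat apply Dominated_plus; auto.
    rewrite Esrs, Ers, Esr, Er, Es. ring. }
  rewrite (sumZ2_ext _ (fun k l => 0 * S k l)) in Htot by (intros; rewrite Horbit; ring).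
  rewrite sumZ2_scal in Htot. lra.
Qed.

Lemma Rabs_IZR_opp a : Rabs (IZR (- a)) = Rabs (IZR a).
Proof. rewrite opp_IZR. apply Rabs_Ropp. Qed.

Definition theta_swap (S : Z -> Z -> R) : Z -> Z -> R := fun k l => S l k.
Definition theta_reflect (S : Z -> Z -> R) : Z -> Z -> R := fun k l => S k (- k - l - 1)%Z.

Definition hat_swap (S : Z -> Z -> R) : Z -> Z -> R := fun k l => S (- l)%Z (- k)%Z.
Definition hat_shear (S : Z -> Z -> R) : Z -> Z -> R := fun k l => S (- k)%Z (k + l)%Z.

Lemma theta_swap_symmetry : sum_symmetry theta_swap.
Proof.
  intros S G. split; [|apply sumZ2_swap, G].
  apply (Dominated_reindex S (fun k l => l) (fun k l => k) 1 0); [lra | intros; lra | exact G].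
Qed.

Lemma theta_reflect_symmetry : sum_symmetry theta_reflect.
Proof.
  intros S G. split.
  - apply (Dominated_reindex S (fun k l => k) (fun k l => (- k - l - 1)%Z) 2 1); [lra| |exact G].
    intros k l. rewrite !minus_IZR, opp_IZR. unfold Rabs; repeat destruct Rcase_abs; lra.
  - unfold theta_reflect. rewrite <- (sumZ2_inner_reflect S (fun k => (- k - 1)%Z) G).
    apply sumZ2_ext. intros; f_equal; lia.
Qed.

Lemma hat_swap_symmetry : sum_symmetry hat_swap.
Proof.
  intros S G. split.
  - apply (Dominated_reindex S (fun k l => (- l)%Z) (fun k l => (- k)%Z) 1 0); [lra| |exact G].
    intros. rewrite !Rabs_IZR_opp. lra.
  - assert (G1 : Dominated (fun k l => S k (0 - l)%Z)).
    { apply (Dominated_reindex S (fun k l => k) (fun k l => (0 - l)%Z) 1 0); [lra| |exact G].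
      intros k l. cbv beta. rewrite minus_IZR, Rminus_0_l, Rabs_Ropp. lra. }
    assert (G2 : Dominated (fun k l => S (- k)%Z (0 - l)%Z)).
    { apply (Dominated_reindex S (fun k l => (- k)%Z) (fun k l => (0 - l)%Z) 1 0); [lra| |exact G].
      intros k l. cbv beta. rewrite minus_IZR, Rminus_0_l, Rabs_Ropp, Rabs_IZR_opp. lra. }
    transitivity (sumZ2 (theta_swap (fun k l => S (- k)%Z (0 - l)%Z))).
    { apply sumZ2_ext. intros; unfold hat_swap, theta_swap; f_equal; lia. }
    rewrite (proj2 (theta_swap_symmetry _ G2)).
    rewrite (sumZ2_outer_opp (fun k l => S k (0 - l)%Z) G1).
    exact (sumZ2_inner_reflect S (fun _ => 0%Z) G).
Qed.

Lemma hat_shear_symmetry : sum_symmetry hat_shear.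
Proof.
  intros S G. split.
  - apply (Dominated_reindex S (fun k l => (- k)%Z) (fun k l => (k + l)%Z) 2 0); [lra| |exact G].
    intros k l. rewrite plus_IZR, opp_IZR. unfold Rabs; repeat destruct Rcase_abs; lra.
  - assert (G1 : Dominated (fun k l => S k (l + - k)%Z)).
    { apply (Dominated_reindex S (fun k l => k) (fun k l => (l + - k)%Z) 2 0); [lra| |exact G].
      intros k l. rewrite plus_IZR, opp_IZR. unfold Rabs; repeat destruct Rcase_abs; lra. }
    transitivity (sumZ2 (fun k l => (fun k0 l0 => S k0 (l0 + - k0)%Z) (- k)%Z l)).
    { apply sumZ2_ext. intros; unfold hat_shear; f_equal; lia. }
    rewrite (sumZ2_outer_opp (fun k l => S k (l + - k)%Z) G1).
    exact (sumZ2_inner_shift S (fun k => (- k)%Z) G).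
Qed.

Lemma mvt_bound (g g' : R -> R) a b M :
  (forall x, Rmin a b <= x <= Rmax a b -> is_derive g x (g' x)) ->
  (forall x, Rmin a b <= x <= Rmax a b -> Rabs (g' x) <= M) ->
  Rabs (g b - g a) <= M * Rabs (b - a).
Proof.
  intros Hd Hb.
  destruct (MVT_gen g a b g') as [c [Hc E]].
  - intros x Hx. apply Hd. lra.
  - intros x Hx. apply continuity_pt_filterlim, (ex_derive_continuous g x).
    exists (g' x). apply Hd, Hx.
  - rewrite E, Rabs_mult. apply Rmult_le_compat_r; [apply Rabs_pos | apply Hb, Hc].
Qed.

Lemma is_derive_shift (g : R -> R) (l u0 x : R) :
  is_derive g (u0 + x) l -> is_derive (fun s => g (u0 + s)) x l.
Proof.
  intros H. assert (Hs : is_derive (fun s => u0 + s) x 1) by (auto_derive; auto; ring).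
  pose proof (is_derive_comp _ _ _ _ _ H Hs) as H0.
  unfold scal in H0; simpl in H0; unfold mult in H0; simpl in H0.
  rewrite Rmult_1_l in H0. exact H0.
Qed.

Lemma Rabs_le_between (x h : R) :
  Rmin 0 h <= x <= Rmax 0 h -> Rabs x <= Rabs h.
Proof. unfold Rmin, Rmax. destruct (Rle_dec 0 h); unfold Rabs; repeat destruct Rcase_abs; lra. Qed.

Lemma taylor2 (g g1 g2 : R -> R) u0 r M h :
  (forall u, Rabs (u - u0) <= r -> is_derive g u (g1 u)) ->
  (forall u, Rabs (u - u0) <= r -> is_derive g1 u (g2 u)) ->
  (forall u, Rabs (u - u0) <= r -> Rabs (g2 u) <= M) ->
  Rabs h <= r ->
  Rabs (g (u0 + h) - g u0 - h * g1 u0) <= M * (h * h).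
Proof.
  intros D1 D2 B Hh.
  assert (Hin : forall x, Rabs x <= Rabs h -> Rabs (u0 + x - u0) <= r)
    by (intros x Hx; replace (u0 + x - u0) with x by ring; lra).
  assert (M0 : 0 <= M).
  { pose proof (Rabs_pos (g2 u0)). pose proof (Rabs_pos h).
    assert (Rabs (u0 - u0) <= r) by (rewrite Rminus_diag_eq, Rabs_R0; auto; lra).
    pose proof (B u0 H1). lra. }
  set (phi := fun s => g (u0 + s) - s * g1 u0).
  replace (g (u0 + h) - g u0 - h * g1 u0) with (phi h - phi 0) by (unfold phi; rewrite Rplus_0_r; ring).
  replace (M * (h * h)) with ((M * Rabs h) * Rabs (h - 0)).
  2: { rewrite Rminus_0_r, Rmult_assoc, <- Rabs_mult, Rabs_pos_eq; [ring | nra]. }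
  apply (mvt_bound phi (fun s => g1 (u0 + s) - g1 u0)).
  - intros x Hx. unfold phi.
    apply (is_derive_minus (fun s => g (u0 + s)) (fun s => s * g1 u0)).
    + apply is_derive_shift, D1, Hin, Rabs_le_between, Hx.
    + auto_derive; auto; ring.
  - intros x Hx. pose proof (Rabs_le_between x h Hx) as Hxh.
    replace (g1 (u0 + x) - g1 u0) with (g1 (u0 + x) - g1 (u0 + 0)) by (rewrite Rplus_0_r; auto).
    eapply Rle_trans.
    + apply (mvt_bound (fun s => g1 (u0 + s)) (fun s => g2 (u0 + s)) 0 x M).
      * intros y Hy. apply is_derive_shift, D2, Hin.
        pose proof (Rabs_le_between y x Hy). lra.
      * intros y Hy. apply B, Hin. pose proof (Rabs_le_between y x Hy). lra.
    + rewrite Rminus_0_r. apply Rmult_le_compat_l; assumption.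
Qed.

Lemma is_derive_of_quadratic_remainder (F : R -> R) u0 D r K :
  0 < r -> 0 <= K ->
  (forall h, Rabs h <= r -> Rabs (F (u0 + h) - F u0 - h * D) <= K * (h * h)) ->
  is_derive F u0 D.
Proof.
  intros Hr HK Key. apply is_derive_Reals. intros eps Heps.
  assert (Hpos : 0 < Rmin r (eps / (K + 1))) by (apply Rmin_glb_lt; [|apply Rdiv_lt_0_compat]; lra).
  exists (mkposreal _ Hpos). intros h Hh0 Hh. simpl in Hh.
  assert (Hhr : Rabs h <= r) by (pose proof (Rmin_l r (eps / (K + 1))); lra).
  assert (Hhe : Rabs h < eps / (K + 1)) by (pose proof (Rmin_r r (eps / (K + 1))); lra).
  specialize (Key h Hhr).
  replace ((F (u0 + h) - F u0) / h - D) with ((F (u0 + h) - F u0 - h * D) / h) by (field; auto).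
  assert (Hh1 : 0 < Rabs h) by (apply Rabs_pos_lt; auto).
  unfold Rdiv. rewrite Rabs_mult, Rabs_inv.
  apply (Rmult_le_compat_r (/ Rabs h)) in Key; [|left; apply Rinv_0_lt_compat; auto].
  eapply Rle_lt_trans; [apply Key|].
  replace (K * (h * h) * / Rabs h) with (K * Rabs h).
  2: { replace (h * h) with (Rabs h * Rabs h) by (rewrite <- Rabs_mult; apply Rabs_pos_eq; nra).
       field. lra. }
  apply (Rmult_lt_compat_l (K + 1)) in Hhe; [|lra].
  replace ((K + 1) * (eps / (K + 1))) with eps in Hhe by (field; lra).
  nra.
Qed.

Lemma is_derive_sumZ2 (f f1 f2 : R -> Z -> Z -> R) u0 r C d :
  0 < r -> 0 < d ->
  (forall u k l, Rabs (u - u0) <= r -> is_derive (fun v => f v k l) u (f1 u k l)) ->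
  (forall u k l, Rabs (u - u0) <= r -> is_derive (fun v => f1 v k l) u (f2 u k l)) ->
  (forall u k l, Rabs (u - u0) <= r ->
     Rabs (f u k l) <= zmajorant2 C d k l /\ Rabs (f1 u k l) <= zmajorant2 C d k l
     /\ Rabs (f2 u k l) <= zmajorant2 C d k l) ->
  is_derive (fun u => sumZ2 (f u)) u0 (sumZ2 (f1 u0)).
Proof.
  intros Hr Hd D1 D2 B.
  assert (G : forall u, Rabs (u - u0) <= r -> Dominated (f u) /\ Dominated (f1 u))
    by (intros u Hu; split; exists C, d; split; auto; intros; apply B, Hu).
  assert (Hu0 : Rabs (u0 - u0) <= r) by (rewrite Rminus_diag_eq, Rabs_R0; auto; lra).
  pose proof (zmajorant2_nonneg (f u0) C d (fun k l => proj1 (B u0 k l Hu0))) as HC.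
  pose proof (exp_opp_lt_1 d Hd) as Hq. set (q := exp (- d)) in Hq.
  apply (is_derive_of_quadratic_remainder _ u0 _ r (2 * (2 * C / (1 - q)) / (1 - q)) Hr).
  { apply Rmult_le_pos; [apply Rmult_le_pos; [lra | apply Rmult_le_pos]|]; try lra;
    left; apply Rinv_0_lt_compat; lra. }
  intros h Hh.
  assert (Hh' : Rabs (u0 + h - u0) <= r) by (replace (u0 + h - u0) with h by ring; auto).
  destruct (G _ Hh') as [Ga _]. destruct (G _ Hu0) as [Gb Gc].
  assert (E : sumZ2 (fun k l => f (u0 + h) k l - f u0 k l - h * f1 u0 k l)
             = sumZ2 (f (u0 + h)) - sumZ2 (f u0) - h * sumZ2 (f1 u0)).
  { rewrite !sumZ2_minus, sumZ2_scal;
      repeat first [reflexivity | assumption | apply Dominated_minus | apply Dominated_scal]. }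
  rewrite <- E.
  assert (Bt : forall k l, Rabs (f (u0 + h) k l - f u0 k l - h * f1 u0 k l)
                           <= zmajorant2 (C * (h * h)) d k l).
  { intros k l. eapply Rle_trans.
    - apply (taylor2 (fun v => f v k l) (fun v => f1 v k l) (fun v => f2 v k l) u0 r
               (zmajorant2 C d k l) h); auto; intros; apply B; auto.
    - unfold zmajorant2. right; ring. }
  eapply Rle_trans; [apply (sumZ2_bound _ (C * (h * h)) d Hd Bt)|].
  fold q. right. field. lra.
Qed.

Definition QF (c : nat -> R -> R) (K L u : R) : R :=
  c 0%nat u * K ^ 2 + c 1%nat u * K * L + c 2%nat u * L ^ 2 + c 3%nat u * K + c 4%nat u * L
  + c 5%nat u.

Lemma QF_derive c c1 K L u :
  (forall i, (i <= 5)%nat -> is_derive (c i) u (c1 i u)) ->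
  is_derive (fun v => QF c K L v) u (QF c1 K L u).
Proof.
  intros H.
  assert (E : forall i, (i <= 5)%nat -> Derive (c i) u = c1 i u)
    by (intros i Hi; apply is_derive_unique, H, Hi).
  unfold QF. auto_derive.
  - repeat split; eexists; apply H; lia.
  - rewrite !E by lia. ring.
Qed.

(* The summands: a Gaussian factor exp(-P) times an oscillating factor psi(p), where P
   and p are quadratic in the lattice point (K, L); term1 and term2 are the first two
   u-derivatives of term. *)
Section Term.
Variables (cP cP1 cP2 cp cp1 cp2 : nat -> R -> R) (psi psi1 psi2 : R -> R) (K L : R).

Definition term u := exp (- QF cP K L u) * psi (QF cp K L u).
Definition term1 u := exp (- QF cP K L u) *
  (- QF cP1 K L u * psi (QF cp K L u) + psi1 (QF cp K L u) * QF cp1 K L u).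
Definition term2 u := exp (- QF cP K L u) *
  (- QF cP1 K L u * (- QF cP1 K L u * psi (QF cp K L u) + psi1 (QF cp K L u) * QF cp1 K L u)
   + (- QF cP2 K L u * psi (QF cp K L u) - QF cP1 K L u * psi1 (QF cp K L u) * QF cp1 K L u
      + psi2 (QF cp K L u) * QF cp1 K L u ^ 2 + psi1 (QF cp K L u) * QF cp2 K L u)).

Hypothesis Hpsi : forall x, is_derive psi x (psi1 x).
Hypothesis Hpsi1 : forall x, is_derive psi1 x (psi2 x).

Lemma term_derive u :
  (forall i, (i <= 5)%nat -> is_derive (cP i) u (cP1 i u)) ->
  (forall i, (i <= 5)%nat -> is_derive (cp i) u (cp1 i u)) ->
  is_derive term u (term1 u).
Proof.
  intros H1 H2. unfold term, term1.
  pose proof (QF_derive cP cP1 K L u H1) as D1. pose proof (QF_derive cp cp1 K L u H2) as D2.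
  assert (E1 : Derive (fun x : R => QF cP K L x) u = QF cP1 K L u) by exact (is_derive_unique _ _ _ D1).
  assert (E2 : Derive (fun x : R => QF cp K L x) u = QF cp1 K L u) by exact (is_derive_unique _ _ _ D2).
  assert (E3 : forall x, Derive psi x = psi1 x) by (intro; apply is_derive_unique, Hpsi).
  auto_derive.
  - repeat split; eexists; eauto.
  - rewrite E1, E2, E3. ring.
Qed.

Lemma term1_derive u :
  (forall i, (i <= 5)%nat -> is_derive (cP i) u (cP1 i u)) ->
  (forall i, (i <= 5)%nat -> is_derive (cp i) u (cp1 i u)) ->
  (forall i, (i <= 5)%nat -> is_derive (cP1 i) u (cP2 i u)) ->
  (forall i, (i <= 5)%nat -> is_derive (cp1 i) u (cp2 i u)) ->
  is_derive term1 u (term2 u).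
Proof.
  intros H1 H2 H3 H4. unfold term1, term2.
  pose proof (QF_derive cP cP1 K L u H1) as D1. pose proof (QF_derive cp cp1 K L u H2) as D2.
  pose proof (QF_derive cP1 cP2 K L u H3) as D3. pose proof (QF_derive cp1 cp2 K L u H4) as D4.
  assert (E1 : Derive (fun x : R => QF cP K L x) u = QF cP1 K L u) by exact (is_derive_unique _ _ _ D1).
  assert (E2 : Derive (fun x : R => QF cp K L x) u = QF cp1 K L u) by exact (is_derive_unique _ _ _ D2).
  assert (E3 : Derive (fun x : R => QF cP1 K L x) u = QF cP2 K L u) by exact (is_derive_unique _ _ _ D3).
  assert (E4 : Derive (fun x : R => QF cp1 K L x) u = QF cp2 K L u) by exact (is_derive_unique _ _ _ D4).
  assert (E5 : forall x, Derive psi x = psi1 x) by (intro; apply is_derive_unique, Hpsi).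
  assert (E6 : forall x, Derive psi1 x = psi2 x) by (intro; apply is_derive_unique, Hpsi1).
  auto_derive.
  - repeat split; eexists; eauto.
  - rewrite E1, E2, E3, E4, E5, E6. ring.
Qed.

End Term.

Lemma Rabs_mult_le a b A B : Rabs a <= A -> Rabs b <= B -> Rabs (a * b) <= A * B.
Proof.
  intros Ha Hb. rewrite Rabs_mult. apply Rmult_le_compat; auto using Rabs_pos.
Qed.

Lemma QF_abs_bound c K L u M : (forall i, (i <= 5)%nat -> Rabs (c i u) <= M) ->
  Rabs (QF c K L u) <= 4 * M * (1 + K ^ 2 + L ^ 2).
Proof.
  intros H. unfold QF.
  pose proof (H 0%nat ltac:(lia)) as H0; pose proof (H 1%nat ltac:(lia)) as H1;
  pose proof (H 2%nat ltac:(lia)) as H2; pose proof (H 3%nat ltac:(lia)) as H3;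
  pose proof (H 4%nat ltac:(lia)) as H4; pose proof (H 5%nat ltac:(lia)) as H5.
  assert (HM : 0 <= M) by (pose proof (Rabs_pos (c 0%nat u)); lra).
  assert (aK : Rabs K <= 1 + K ^ 2) by (unfold Rabs; destruct Rcase_abs; nra).
  assert (aL : Rabs L <= 1 + L ^ 2) by (unfold Rabs; destruct Rcase_abs; nra).
  assert (aKL : Rabs (K * L) <= K ^ 2 + L ^ 2)
    by (rewrite Rabs_mult; unfold Rabs; repeat destruct Rcase_abs; nra).
  assert (K2 : Rabs (K ^ 2) <= K ^ 2) by (right; apply Rabs_pos_eq; nra).
  assert (L2 : Rabs (L ^ 2) <= L ^ 2) by (right; apply Rabs_pos_eq; nra).
  pose proof (Rabs_mult_le _ _ _ _ H0 K2) as T0.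
  pose proof (Rabs_mult_le _ _ _ _ H1 aKL) as T1. rewrite <- Rmult_assoc in T1.
  pose proof (Rabs_mult_le _ _ _ _ H2 L2) as T2.
  pose proof (Rabs_mult_le _ _ _ _ H3 aK) as T3.
  pose proof (Rabs_mult_le _ _ _ _ H4 aL) as T4.
  assert (T5 : Rabs (c 5%nat u) <= M) by exact H5.
  pose proof (Rabs_triang (c 0%nat u * K ^ 2) (c 1%nat u * K * L)).
  pose proof (Rabs_triang (c 0%nat u * K ^ 2 + c 1%nat u * K * L) (c 2%nat u * L ^ 2)).
  pose proof (Rabs_triang (c 0%nat u * K ^ 2 + c 1%nat u * K * L + c 2%nat u * L ^ 2) (c 3%nat u * K)).
  pose proof (Rabs_triang (c 0%nat u * K ^ 2 + c 1%nat u * K * L + c 2%nat u * L ^ 2 + c 3%nat u * K)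
                          (c 4%nat u * L)).
  pose proof (Rabs_triang (c 0%nat u * K ^ 2 + c 1%nat u * K * L + c 2%nat u * L ^ 2 + c 3%nat u * K
                           + c 4%nat u * L) (c 5%nat u)).
  rewrite !Rmult_plus_distr_l, Rmult_1_r in T3, T4.
  assert (0 <= M * K ^ 2) by (apply Rmult_le_pos; nra).
  assert (0 <= M * L ^ 2) by (apply Rmult_le_pos; nra).
  rewrite Rmult_plus_distr_l in T1. lra.
Qed.

(* Completing the square: a X >= - g X^2 - M^2/(4g) whenever |a| <= M. *)
Lemma linear_ge_neg_quadratic a X M g : 0 < g -> Rabs a <= M ->
  a * X >= - g * X ^ 2 - M * M / (4 * g).
Proof.
  intros Hg Ha. assert (a * a <= M * M) by (unfold Rabs in Ha; destruct Rcase_abs; nra).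
  apply Rle_ge, (Rmult_le_reg_l (4 * g)); [lra|].
  replace (4 * g * (- g * X ^ 2 - M * M / (4 * g))) with (- 4 * g * g * X ^ 2 - M * M)
    by (field; lra).
  pose proof (pow2_ge_0 (2 * g * X + a)). nra.
Qed.

Lemma cross_term_ge a K L : a * K * L >= - (Rabs a / 2) * (K ^ 2 + L ^ 2).
Proof.
  assert (X : Rabs (a * K * L) <= Rabs a * ((K ^ 2 + L ^ 2) / 2)).
  { rewrite Rmult_assoc, Rabs_mult. apply Rmult_le_compat_l; [apply Rabs_pos|].
    rewrite Rabs_mult. pose proof (pow2_ge_0 (K - L)); pose proof (pow2_ge_0 (K + L)).
    unfold Rabs; repeat destruct Rcase_abs; nra. }
  pose proof (Rle_abs (- (a * K * L))) as Y. rewrite Rabs_Ropp in Y. lra.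
Qed.

Lemma QF_coercive c K L u M g : 0 < g -> (forall i, (i <= 5)%nat -> Rabs (c i u) <= M) ->
  c 0%nat u - Rabs (c 1%nat u) / 2 >= 2 * g -> c 2%nat u - Rabs (c 1%nat u) / 2 >= 2 * g ->
  QF c K L u >= g * (K ^ 2 + L ^ 2) - (M * M / (2 * g) + M).
Proof.
  intros Hg H H0 H2. unfold QF.
  pose proof (cross_term_ge (c 1%nat u) K L).
  pose proof (linear_ge_neg_quadratic (c 3%nat u) K M g Hg (H 3%nat ltac:(lia))).
  pose proof (linear_ge_neg_quadratic (c 4%nat u) L M g Hg (H 4%nat ltac:(lia))).
  assert (c 5%nat u >= - M)
    by (pose proof (Rle_abs (- c 5%nat u)); rewrite Rabs_Ropp in *; pose proof (H 5%nat ltac:(lia)); lra).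
  replace (M * M / (2 * g)) with (M * M / (4 * g) + M * M / (4 * g)) by (field; lra).
  assert (0 <= K ^ 2) by nra. assert (0 <= L ^ 2) by nra.
  nra.
Qed.

Lemma bracket1_bound a b c d X : Rabs a <= X -> Rabs b <= 1 -> Rabs c <= 1 -> Rabs d <= X ->
  Rabs (- a * b + c * d) <= (1 + 2 * X) ^ 2.
Proof.
  intros Ha Hb Hc Hd. assert (0 <= X) by (pose proof (Rabs_pos a); lra).
  eapply Rle_trans; [apply Rabs_triang|].
  pose proof (Rabs_mult_le _ _ _ _ Ha Hb). pose proof (Rabs_mult_le _ _ _ _ Hc Hd).
  replace (- a * b) with (- (a * b)) by ring. rewrite Rabs_Ropp. nra.
Qed.

Lemma bracket2_bound a b c d e f g X : Rabs a <= X -> Rabs b <= 1 -> Rabs c <= 1 -> Rabs d <= X ->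
  Rabs e <= X -> Rabs f <= 1 -> Rabs g <= X ->
  Rabs (- a * (- a * b + c * d) + (- e * b - a * c * d + f * d ^ 2 + c * g)) <= (1 + 2 * X) ^ 2.
Proof.
  intros Ha Hb Hc Hd He Hf Hg. assert (0 <= X) by (pose proof (Rabs_pos a); lra).
  assert (T1 : Rabs (- a * (- a * b + c * d)) <= X * (2 * X)).
  { apply Rabs_mult_le; [rewrite Rabs_Ropp; exact Ha|].
    eapply Rle_trans; [apply Rabs_triang|].
    pose proof (Rabs_mult_le _ _ _ _ Ha Hb). pose proof (Rabs_mult_le _ _ _ _ Hc Hd).
    replace (- a * b) with (- (a * b)) by ring. rewrite Rabs_Ropp. lra. }
  assert (T2 : Rabs (- e * b) <= X * 1) by (apply Rabs_mult_le; auto; rewrite Rabs_Ropp; auto).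
  assert (T3 : Rabs (a * c * d) <= X * 1 * X) by (repeat apply Rabs_mult_le; auto).
  assert (T4 : Rabs (f * d ^ 2) <= 1 * (X * X)).
  { apply Rabs_mult_le; auto. simpl. rewrite Rmult_1_r. apply Rabs_mult_le; auto. }
  assert (T5 : Rabs (c * g) <= 1 * X) by (apply Rabs_mult_le; auto).
  pose proof (Rabs_triang (- a * (- a * b + c * d)) (- e * b - a * c * d + f * d ^ 2 + c * g)).
  pose proof (Rabs_triang (- e * b - a * c * d + f * d ^ 2) (c * g)).
  pose proof (Rabs_triang (- e * b - a * c * d) (f * d ^ 2)).
  pose proof (Rabs_triang (- e * b) (- (a * c * d))) as T6. rewrite Rabs_Ropp in T6.
  replace (- e * b + - (a * c * d)) with (- e * b - a * c * d) in T6 by ring.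
  nra.
Qed.

Lemma Rabs_IZR_le_sq k : Rabs (IZR k) <= IZR k ^ 2.
Proof. rewrite <- abs_IZR. simpl. rewrite Rmult_1_r, <- mult_IZR. apply IZR_le. nia. Qed.

Definition gauss_const (M g : R) : R :=
  exp (M * M / (2 * g) + M) * (1 + 8 * M) ^ 2 / (Rmin 1 (g / 4)) ^ 2.

Lemma gaussian_absorbs_polynomial k l M g A E :
  0 < g -> 0 <= M -> 0 <= A ->
  A <= exp (M * M / (2 * g) + M) * exp (- g * (IZR k ^ 2 + IZR l ^ 2)) ->
  Rabs E <= (1 + 2 * (4 * M * (1 + IZR k ^ 2 + IZR l ^ 2))) ^ 2 ->
  Rabs (A * E) <= zmajorant2 (gauss_const M g) (g / 2) k l.
Proof.
  intros Hg HM HA HA2 HE. set (c0 := M * M / (2 * g) + M) in *.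
  set (K := IZR k) in *. set (L := IZR l) in *. set (s := K ^ 2 + L ^ 2).
  assert (Hs : 0 <= s) by (unfold s; nra).
  assert (Hsk : Rabs K + Rabs L <= s)
    by (unfold s, K, L; pose proof (Rabs_IZR_le_sq k); pose proof (Rabs_IZR_le_sq l); lra).
  set (m := Rmin 1 (g / 4)).
  assert (Hm : 0 < m) by (apply Rmin_glb_lt; lra).
  assert (Hm1 : m <= 1) by apply Rmin_l. assert (Hm2 : m <= g / 4) by apply Rmin_r.
  assert (E1 : (1 + 2 * (4 * M * (1 + K ^ 2 + L ^ 2))) ^ 2 <= ((1 + 8 * M) * (1 + s)) ^ 2).
  { replace (1 + K ^ 2 + L ^ 2) with (1 + s) by (unfold s; ring). apply pow_incr. nra. }
  assert (E2 : m * (1 + s) <= exp (g * s / 4)).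
  { eapply Rle_trans; [|apply exp_ineq1_le]. nra. }
  assert (E3 : (m * (1 + s)) ^ 2 <= exp (g * s / 2)).
  { replace (g * s / 2) with (g * s / 4 + g * s / 4) by field. rewrite exp_plus.
    simpl. rewrite Rmult_1_r. apply Rmult_le_compat; nra. }
  rewrite Rabs_mult, (Rabs_pos_eq A HA).
  eapply Rle_trans.
  { apply Rmult_le_compat; [exact HA | apply Rabs_pos | exact HA2 | eapply Rle_trans; [apply HE | apply E1]]. }
  unfold zmajorant2, gauss_const. fold c0. fold m.
  assert (X1 : exp (- g * s) * exp (g * s / 2) = exp (- (g / 2) * s))
    by (rewrite <- exp_plus; f_equal; field).
  assert (X2 : exp (- (g / 2) * s) <= exp (- (g / 2) * (Rabs K + Rabs L))) by (apply exp_le_mono; nra).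
  pose proof (exp_pos c0). pose proof (exp_pos (- g * s)).
  assert (0 < m ^ 2) by (apply pow_lt; auto).
  replace (exp c0 * exp (- g * (K ^ 2 + L ^ 2)) * ((1 + 8 * M) * (1 + s)) ^ 2) with
    (exp c0 * (1 + 8 * M) ^ 2 / m ^ 2 * (exp (- g * s) * (m * (1 + s)) ^ 2)) by (unfold s; field; lra).
  apply Rmult_le_compat_l.
  { apply Rmult_le_pos; [apply Rmult_le_pos; [lra | nra] | left; apply Rinv_0_lt_compat; auto]. }
  eapply Rle_trans; [apply Rmult_le_compat_l; [lra | apply E3]|]. rewrite X1. exact X2.
Qed.

Lemma term_bounds (cP cP1 cP2 cp cp1 cp2 : nat -> R -> R) (psi psi1 psi2 : R -> R) k l u M g :
  0 < g -> (forall x, Rabs (psi x) <= 1) -> (forall x, Rabs (psi1 x) <= 1) ->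
  (forall x, Rabs (psi2 x) <= 1) ->
  (forall i, (i <= 5)%nat -> Rabs (cP i u) <= M /\ Rabs (cP1 i u) <= M /\ Rabs (cP2 i u) <= M
                             /\ Rabs (cp1 i u) <= M /\ Rabs (cp2 i u) <= M) ->
  cP 0%nat u - Rabs (cP 1%nat u) / 2 >= 2 * g -> cP 2%nat u - Rabs (cP 1%nat u) / 2 >= 2 * g ->
  Rabs (term cP cp psi (IZR k) (IZR l) u) <= zmajorant2 (gauss_const M g) (g / 2) k l /\
  Rabs (term1 cP cP1 cp cp1 psi psi1 (IZR k) (IZR l) u) <= zmajorant2 (gauss_const M g) (g / 2) k l /\
  Rabs (term2 cP cP1 cP2 cp cp1 cp2 psi psi1 psi2 (IZR k) (IZR l) u)
    <= zmajorant2 (gauss_const M g) (g / 2) k l.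
Proof.
  intros Hg P0 P1 P2 B L0 L2.
  assert (HM : 0 <= M) by (destruct (B 0%nat ltac:(lia)) as [H _]; pose proof (Rabs_pos (cP 0%nat u)); lra).
  set (K := IZR k). set (L := IZR l).
  pose proof (QF_coercive cP K L u M g Hg (fun i Hi => proj1 (B i Hi)) L0 L2) as Hlow.
  set (A := exp (- QF cP K L u)).
  assert (HA : 0 <= A) by (left; apply exp_pos).
  assert (HA2 : A <= exp (M * M / (2 * g) + M) * exp (- g * (K ^ 2 + L ^ 2)))
    by (unfold A; rewrite <- exp_plus; apply exp_le_mono; lra).
  set (X := 4 * M * (1 + K ^ 2 + L ^ 2)).
  assert (HX : 0 <= X) by (unfold X; nra).
  pose proof (QF_abs_bound cP1 K L u M (fun i Hi => proj1 (proj2 (B i Hi)))) as Q1.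
  pose proof (QF_abs_bound cP2 K L u M (fun i Hi => proj1 (proj2 (proj2 (B i Hi))))) as Q2.
  pose proof (QF_abs_bound cp1 K L u M (fun i Hi => proj1 (proj2 (proj2 (proj2 (B i Hi)))))) as q1.
  pose proof (QF_abs_bound cp2 K L u M (fun i Hi => proj2 (proj2 (proj2 (proj2 (B i Hi)))))) as q2.
  fold X in Q1, Q2, q1, q2.
  split; [|split]; apply gaussian_absorbs_polynomial; auto; fold K L X.
  - pose proof (P0 (QF cp K L u)). nra.
  - apply bracket1_bound; auto.
  - apply bracket2_bound; auto.
Qed.

Definition coef_max (c : nat -> R -> R) (u : R) : R :=
  Rmax (Rabs (c 0%nat u)) (Rmax (Rabs (c 1%nat u)) (Rmax (Rabs (c 2%nat u))
    (Rmax (Rabs (c 3%nat u)) (Rmax (Rabs (c 4%nat u)) (Rabs (c 5%nat u)))))).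

Lemma coef_le_max c u i : (i <= 5)%nat -> Rabs (c i u) <= coef_max c u.
Proof.
  intros Hi. unfold coef_max.
  destruct i as [|[|[|[|[|[|i]]]]]]; [..|lia];
    repeat (apply Rmax_l || (eapply Rle_trans; [|apply Rmax_r])); apply Rle_refl.
Qed.

Lemma coef_max_nonneg c u : 0 <= coef_max c u.
Proof. eapply Rle_trans; [apply Rabs_pos | apply (coef_le_max c u 0); lia]. Qed.

Lemma coef_near_bound c u0 u eps i : (i <= 5)%nat -> Rabs (c i u - c i u0) <= eps ->
  Rabs (c i u) <= coef_max c u0 + eps.
Proof.
  intros Hi H. pose proof (coef_le_max c u0 i Hi).
  pose proof (Rabs_triang (c i u - c i u0) (c i u0)) as T.
  replace (c i u - c i u0 + c i u0) with (c i u) in T by ring. lra.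
Qed.

Lemma coefs_near (c : nat -> R -> R) (u0 eps : R) : 0 < eps -> (forall i, (i <= 5)%nat -> continuous (c i) u0) ->
  locally u0 (fun u => forall i, (i <= 5)%nat -> Rabs (c i u - c i u0) <= eps).
Proof.
  intros Heps Hc.
  assert (Hi : forall i, (i <= 5)%nat -> locally u0 (fun u => Rabs (c i u - c i u0) <= eps)).
  { intros i Hi.
    apply (filter_imp (fun u => ball (c i u0) (mkposreal eps Heps) (c i u))).
    - intros u Hu. left. exact Hu.
    - exact (proj1 (filterlim_locally (c i) (c i u0)) (Hc i Hi) (mkposreal eps Heps)). }
  generalize (@filter_and _ (locally u0) _ _ _ (Hi 0%nat ltac:(lia)) (@filter_and _ (locally u0) _ _ _ (Hi 1%nat ltac:(lia))
             (@filter_and _ (locally u0) _ _ _ (Hi 2%nat ltac:(lia)) (@filter_and _ (locally u0) _ _ _ (Hi 3%nat ltac:(lia))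
             (@filter_and _ (locally u0) _ _ _ (Hi 4%nat ltac:(lia)) (Hi 5%nat ltac:(lia))))))).
  apply filter_imp. intros u Hu i Hi'.
  destruct i as [|[|[|[|[|[|i]]]]]]; [..|lia]; tauto.
Qed.

Lemma ball_of_half (u0 u : R) (r : posreal) : Rabs (u - u0) <= r / 2 -> ball u0 r u.
Proof.
  intros H. pose proof (cond_pos r).
  unfold ball; simpl; unfold AbsRing_ball, abs, minus, plus, opp; simpl.
  unfold Rminus in H. lra.
Qed.

Section GaussianSum.
Variables (cP cP1 cP2 cp cp1 cp2 : nat -> R -> R) (psi psi1 psi2 : R -> R) (u0 : R).
Hypotheses (Bpsi : forall x, Rabs (psi x) <= 1) (Bpsi1 : forall x, Rabs (psi1 x) <= 1)
  (Bpsi2 : forall x, Rabs (psi2 x) <= 1).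
Hypothesis Hcoef : locally u0 (fun u => forall i, (i <= 5)%nat ->
  is_derive (cP i) u (cP1 i u) /\ is_derive (cP1 i) u (cP2 i u) /\
  is_derive (cp i) u (cp1 i u) /\ is_derive (cp1 i) u (cp2 i u)).
Hypothesis Hcoef2 : forall i, (i <= 5)%nat -> ex_derive (cP2 i) u0 /\ ex_derive (cp2 i) u0.
Hypotheses (Hpos0 : 0 < cP 0%nat u0 - Rabs (cP 1%nat u0) / 2)
  (Hpos2 : 0 < cP 2%nat u0 - Rabs (cP 1%nat u0) / 2).

Lemma coefficients_near eps : 0 < eps -> locally u0 (fun u =>
  (forall i, (i <= 5)%nat ->
     is_derive (cP i) u (cP1 i u) /\ is_derive (cP1 i) u (cP2 i u) /\
     is_derive (cp i) u (cp1 i u) /\ is_derive (cp1 i) u (cp2 i u)) /\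
  (forall i, (i <= 5)%nat -> Rabs (cP i u - cP i u0) <= eps) /\
  (forall i, (i <= 5)%nat -> Rabs (cP1 i u - cP1 i u0) <= eps) /\
  (forall i, (i <= 5)%nat -> Rabs (cP2 i u - cP2 i u0) <= eps) /\
  (forall i, (i <= 5)%nat -> Rabs (cp1 i u - cp1 i u0) <= eps) /\
  (forall i, (i <= 5)%nat -> Rabs (cp2 i u - cp2 i u0) <= eps)).
Proof.
  intros Heps. pose proof (locally_singleton _ _ Hcoef) as D0.
  assert (Hcont : forall c : nat -> R -> R, (forall i, (i <= 5)%nat -> ex_derive (c i) u0) ->
                  forall i, (i <= 5)%nat -> continuous (c i) u0)
    by (intros c Hc i Hi; exact (ex_derive_continuous (V := R_NormedModule) _ u0 (Hc i Hi))).
  repeat apply (@filter_and _ (locally u0) _); [exact Hcoef | apply coefs_near, Hcont; auto..].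
  - intros i Hi. exists (cP1 i u0). apply (D0 i Hi).
  - intros i Hi. exists (cP2 i u0). apply (D0 i Hi).
  - intros i Hi. apply (Hcoef2 i Hi).
  - intros i Hi. exists (cp2 i u0). apply (D0 i Hi).
  - intros i Hi. apply (Hcoef2 i Hi).
Qed.

Lemma margin_near (a a0 b b0 g : R) : 0 <= g -> 4 * g <= a0 - Rabs b0 / 2 ->
  Rabs (a - a0) <= g -> Rabs (b - b0) <= g -> a - Rabs b / 2 >= 2 * g.
Proof.
  intros Hg H Ha Hb. pose proof (Rabs_triang_inv b b0).
  pose proof (Rle_abs (- (a - a0))). rewrite Rabs_Ropp in *. lra.
Qed.

(* Near u0 the coefficients stay bounded and the exponent stays coercive, so term, term1
   and term2 are dominated uniformly in u. *)
Lemma gaussian_local_domination : exists r C d, 0 < r /\ 0 < d /\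
  forall u, Rabs (u - u0) <= r ->
  (forall i, (i <= 5)%nat ->
     is_derive (cP i) u (cP1 i u) /\ is_derive (cP1 i) u (cP2 i u) /\
     is_derive (cp i) u (cp1 i u) /\ is_derive (cp1 i) u (cp2 i u)) /\
  forall k l,
    Rabs (term cP cp psi (IZR k) (IZR l) u) <= zmajorant2 C d k l /\
    Rabs (term1 cP cP1 cp cp1 psi psi1 (IZR k) (IZR l) u) <= zmajorant2 C d k l /\
    Rabs (term2 cP cP1 cP2 cp cp1 cp2 psi psi1 psi2 (IZR k) (IZR l) u) <= zmajorant2 C d k l.
Proof.
  set (m0 := cP 0%nat u0 - Rabs (cP 1%nat u0) / 2) in *.
  set (m2 := cP 2%nat u0 - Rabs (cP 1%nat u0) / 2) in *.
  set (g := Rmin m0 m2 / 4).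
  assert (Hg : 0 < g) by (unfold g; apply Rmult_lt_0_compat; [apply Rmin_glb_lt|]; lra).
  assert (Hg0 : 4 * g <= m0) by (unfold g; pose proof (Rmin_l m0 m2); lra).
  assert (Hg2 : 4 * g <= m2) by (unfold g; pose proof (Rmin_r m0 m2); lra).
  destruct (coefficients_near g Hg) as [rho Hrho].
  set (M := g + (coef_max cP u0 + coef_max cP1 u0 + coef_max cP2 u0 + coef_max cp1 u0
                 + coef_max cp2 u0)).
  pose proof (coef_max_nonneg cP u0). pose proof (coef_max_nonneg cP1 u0).
  pose proof (coef_max_nonneg cP2 u0). pose proof (coef_max_nonneg cp1 u0).
  pose proof (coef_max_nonneg cp2 u0).
  exists (rho / 2), (gauss_const M g), (g / 2).
  split; [pose proof (cond_pos rho); lra | split; [lra|]].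
  intros u Hu. destruct (Hrho u (ball_of_half u0 u rho Hu)) as [Du [N1 [N2 [N3 [N4 N5]]]]].
  split; [exact Du|]. intros k l. apply term_bounds; auto.
  - intros i Hi.
    pose proof (coef_near_bound cP u0 u g i Hi (N1 i Hi)).
    pose proof (coef_near_bound cP1 u0 u g i Hi (N2 i Hi)).
    pose proof (coef_near_bound cP2 u0 u g i Hi (N3 i Hi)).
    pose proof (coef_near_bound cp1 u0 u g i Hi (N4 i Hi)).
    pose proof (coef_near_bound cp2 u0 u g i Hi (N5 i Hi)).
    unfold M. repeat split; lra.
  - apply (margin_near _ (cP 0%nat u0) _ (cP 1%nat u0)); [lra | exact Hg0 | apply N1; lia..].
  - apply (margin_near _ (cP 2%nat u0) _ (cP 1%nat u0)); [lra | exact Hg2 | apply N1; lia..].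
Qed.

Lemma term1_dominated : Dominated (fun k l => term1 cP cP1 cp cp1 psi psi1 (IZR k) (IZR l) u0).
Proof.
  destruct gaussian_local_domination as [r [C [d [Hr [Hd H]]]]].
  assert (Hu0 : Rabs (u0 - u0) <= r) by (rewrite Rminus_diag_eq, Rabs_R0; auto; lra).
  exists C, d. split; [exact Hd|]. intros k l. apply (proj2 (H u0 Hu0) k l).
Qed.

Hypotheses (Dpsi : forall x, is_derive psi x (psi1 x)) (Dpsi1 : forall x, is_derive psi1 x (psi2 x)).

Lemma is_derive_gaussian_sum :
  is_derive (fun u => sumZ2 (fun k l => term cP cp psi (IZR k) (IZR l) u)) u0
    (sumZ2 (fun k l => term1 cP cP1 cp cp1 psi psi1 (IZR k) (IZR l) u0)).
Proof.
  destruct gaussian_local_domination as [r [C [d [Hr [Hd H]]]]].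
  apply (is_derive_sumZ2 (fun u k l => term cP cp psi (IZR k) (IZR l) u)
                         (fun u k l => term1 cP cP1 cp cp1 psi psi1 (IZR k) (IZR l) u)
                         (fun u k l => term2 cP cP1 cP2 cp cp1 cp2 psi psi1 psi2 (IZR k) (IZR l) u)
                         u0 r C d Hr Hd).
  - intros u k l Hu. destruct (H u Hu) as [Du _].
    apply term_derive; auto; intros i Hi; apply (Du i Hi).
  - intros u k l Hu. destruct (H u Hu) as [Du _].
    apply term1_derive; auto; intros i Hi; apply (Du i Hi).
  - intros u k l Hu. apply (proj2 (H u Hu)).
Qed.

End GaussianSum.

Definition czero (i : nat) (u : R) : R := 0.

Lemma QF_czero K L u : QF czero K L u = 0.
Proof. unfold QF, czero. ring. Qed.

Lemma term1_same_level cP cP1 cp cp1 psi psi1 u K L K' L' :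
  QF cP K' L' u = QF cP K L u ->
  psi (QF cp K' L' u) = psi (QF cp K L u) /\ psi1 (QF cp K' L' u) = psi1 (QF cp K L u) ->
  term1 cP cP1 cp cp1 psi psi1 K' L' u = exp (- QF cP K L u) *
    (- QF cP1 K' L' u * psi (QF cp K L u) + psi1 (QF cp K L u) * QF cp1 K' L' u).
Proof. intros E1 [E2 E3]. unfold term1. rewrite E1, E2, E3. reflexivity. Qed.

(* Theta-type sums: when the exponent is a multiple of K^2+KL+L^2+K+L plus a constant,
   it is constant on the orbits of the group generated by theta_swap and theta_reflect
   (the permutations of (K, L, -K-L-1)), so the derivative sum vanishes as soon as the
   derivative of the exponent sums to zero over every orbit. *)
Lemma theta_type_sum_zero (cP cP1 : nat -> R -> R) psi psi1 u a b :
  Dominated (fun k l => term1 cP cP1 czero czero psi psi1 (IZR k) (IZR l) u) ->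
  (forall K L, QF cP K L u = a * (K ^ 2 + K * L + L ^ 2 + K + L) + b) ->
  (forall K L, QF cP1 K L u + QF cP1 L K u + QF cP1 K (- K - L - 1) u + QF cP1 (- K - L - 1) K u
               + QF cP1 L (- K - L - 1) u + QF cP1 (- K - L - 1) L u = 0) ->
  sumZ2 (fun k l => term1 cP cP1 czero czero psi psi1 (IZR k) (IZR l) u) = 0.
Proof.
  intros G HP HP1.
  apply (sumZ2_orbit_zero theta_swap theta_reflect _ theta_swap_symmetry theta_reflect_symmetry G).
  intros k l. unfold theta_swap, theta_reflect. rewrite !minus_IZR, !opp_IZR.
  set (K := IZR k). set (L := IZR l). clearbody K L.
  replace (- L - K - 1) with (- K - L - 1) by ring.
  rewrite !(term1_same_level cP cP1 czero czero psi psi1 u K L)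
    by (rewrite ?HP, ?QF_czero; first [ring | split; reflexivity]).
  rewrite !QF_czero.
  transitivity (- exp (- QF cP K L u) * psi 0 *
    (QF cP1 K L u + QF cP1 L K u + QF cP1 K (- K - L - 1) u + QF cP1 (- K - L - 1) K u
     + QF cP1 L (- K - L - 1) u + QF cP1 (- K - L - 1) L u)); [ring|].
  rewrite HP1. ring.
Qed.

Lemma periodic_at (f : R -> R) x y (n : Z) :
  (forall x n, f (x + 2 * PI * IZR n) = f x) -> y = x + 2 * PI * IZR n -> f y = f x.
Proof. intros Hper ->. apply Hper. Qed.

(* Hat-type sums: the exponent is a multiple of K^2+KL+L^2 and the phase is
   2 pi (K - L)/3, both invariant (the phase modulo 2 pi Z) under hat_swap and hat_shear,
   so the derivative sum vanishes when the derivatives of exponent and phase sum to zero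
   over every orbit. *)
Lemma hat_type_sum_zero (cP cP1 cp cp1 : nat -> R -> R) psi psi1 u a :
  Dominated (fun k l => term1 cP cP1 cp cp1 psi psi1 (IZR k) (IZR l) u) ->
  (forall x n, psi (x + 2 * PI * IZR n) = psi x) ->
  (forall x n, psi1 (x + 2 * PI * IZR n) = psi1 x) ->
  (forall K L, QF cP K L u = a * (K ^ 2 + K * L + L ^ 2)) ->
  (forall K L, QF cp K L u = 2 * PI / 3 * (K - L)) ->
  (forall K L, QF cP1 K L u + QF cP1 (- L) (- K) u + QF cP1 (- K) (K + L) u
               + QF cP1 (- (K + L)) K u + QF cP1 L (- L - K) u + QF cP1 (L + K) (- L) u = 0) ->
  (forall K L, QF cp1 K L u + QF cp1 (- L) (- K) u + QF cp1 (- K) (K + L) u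
               + QF cp1 (- (K + L)) K u + QF cp1 L (- L - K) u + QF cp1 (L + K) (- L) u = 0) ->
  sumZ2 (fun k l => term1 cP cP1 cp cp1 psi psi1 (IZR k) (IZR l) u) = 0.
Proof.
  intros G Hper Hper1 HP Hph HP1 Hph1.
  apply (sumZ2_orbit_zero hat_swap hat_shear _ hat_swap_symmetry hat_shear_symmetry G).
  intros k l. unfold hat_swap, hat_shear. rewrite !Z.opp_involutive.
  replace (- (- l + - k))%Z with (l + k)%Z by lia.
  repeat rewrite ?opp_IZR, ?plus_IZR. set (K := IZR k). set (L := IZR l).
  replace (- L + - K) with (- L - K) by ring.
  assert (Hlevel : forall K' L' n, QF cP K' L' u = QF cP K L u ->
            QF cp K' L' u = QF cp K L u + 2 * PI * IZR n ->
            term1 cP cP1 cp cp1 psi psi1 K' L' u = exp (- QF cP K L u) *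
              (- QF cP1 K' L' u * psi (QF cp K L u) + psi1 (QF cp K L u) * QF cp1 K' L' u)).
  { intros K' L' n E1 E2. apply term1_same_level; [exact E1|].
    split; apply (periodic_at _ _ _ n); auto. }
  (* Side conditions: the exponents agree, and the phases differ by 2 pi n. *)
  rewrite (Hlevel K L 0%Z), (Hlevel (- L) (- K) 0%Z), (Hlevel (- K) (K + L) (- k)%Z),
    (Hlevel (- (K + L)) K (- k)%Z), (Hlevel L (- L - K) l), (Hlevel (L + K) (- L) l);
    try solve [rewrite !HP; ring | rewrite !Hph, ?opp_IZR; unfold K, L; field].
  transitivity (exp (- QF cP K L u) *
    (- psi (QF cp K L u) * (QF cP1 K L u + QF cP1 (- L) (- K) u + QF cP1 (- K) (K + L) u
        + QF cP1 (- (K + L)) K u + QF cP1 L (- L - K) u + QF cP1 (L + K) (- L) u)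
     + psi1 (QF cp K L u) * (QF cp1 K L u + QF cp1 (- L) (- K) u + QF cp1 (- K) (K + L) u
        + QF cp1 (- (K + L)) K u + QF cp1 L (- L - K) u + QF cp1 (L + K) (- L) u))); [ring|].
  rewrite HP1, Hph1. ring.
Qed.

Definition oscillator (psi psi1 psi2 : R -> R) : Prop :=
  (forall x, is_derive psi x (psi1 x)) /\ (forall x, is_derive psi1 x (psi2 x)) /\
  (forall x, Rabs (psi x) <= 1) /\ (forall x, Rabs (psi1 x) <= 1) /\ (forall x, Rabs (psi2 x) <= 1) /\
  (forall x n, psi (x + 2 * PI * IZR n) = psi x) /\ (forall x n, psi1 (x + 2 * PI * IZR n) = psi1 x).

Lemma trig_period_Z x n : cos (x + 2 * PI * IZR n) = cos x /\ sin (x + 2 * PI * IZR n) = sin x.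
Proof.
  destruct (Z_le_gt_dec 0 n).
  - replace n with (Z.of_nat (Z.to_nat n)) by lia. rewrite <- INR_IZR_INZ.
    replace (x + 2 * PI * INR (Z.to_nat n)) with (x + 2 * INR (Z.to_nat n) * PI) by ring.
    split; [apply cos_period | apply sin_period].
  - set (m := Z.to_nat (- n)).
    assert (E : IZR n = - INR m) by (unfold m; rewrite INR_IZR_INZ, <- opp_IZR; f_equal; lia).
    rewrite E.
    pose proof (cos_period (x + 2 * PI * - INR m) m). pose proof (sin_period (x + 2 * PI * - INR m) m).
    replace (x + 2 * PI * - INR m + 2 * INR m * PI) with x in * by ring. split; auto.
Qed.

Lemma cos_oscillator : oscillator cos (fun x => - sin x) (fun x => - cos x).
Proof.
  split; [|split; [|split; [|split; [|split; [|split]]]]].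
  - intro x. auto_derive; auto; ring.
  - intro x. auto_derive; auto; ring.
  - intro x. apply Rabs_le, COS_bound.
  - intro x. rewrite Rabs_Ropp. apply Rabs_le, SIN_bound.
  - intro x. rewrite Rabs_Ropp. apply Rabs_le, COS_bound.
  - intros x n. apply trig_period_Z.
  - intros x n. rewrite (proj2 (trig_period_Z x n)). reflexivity.
Qed.

Lemma sin_oscillator : oscillator sin cos (fun x => - sin x).
Proof.
  split; [|split; [|split; [|split; [|split; [|split]]]]].
  - intro x. auto_derive; auto; ring.
  - intro x. auto_derive; auto; ring.
  - intro x. apply Rabs_le, SIN_bound.
  - intro x. apply Rabs_le, COS_bound.
  - intro x. rewrite Rabs_Ropp. apply Rabs_le, SIN_bound.
  - intros x n. apply trig_period_Z.
  - intros x n. apply trig_period_Z.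
Qed.

Lemma theta_type_critical (cP cP1 cP2 : nat -> R -> R) u0 a b :
  locally u0 (fun u => forall i, (i <= 5)%nat ->
    is_derive (cP i) u (cP1 i u) /\ is_derive (cP1 i) u (cP2 i u)) ->
  (forall i, (i <= 5)%nat -> ex_derive (cP2 i) u0) ->
  0 < cP 0%nat u0 - Rabs (cP 1%nat u0) / 2 -> 0 < cP 2%nat u0 - Rabs (cP 1%nat u0) / 2 ->
  (forall K L, QF cP K L u0 = a * (K ^ 2 + K * L + L ^ 2 + K + L) + b) ->
  (forall K L, QF cP1 K L u0 + QF cP1 L K u0 + QF cP1 K (- K - L - 1) u0
               + QF cP1 (- K - L - 1) K u0 + QF cP1 L (- K - L - 1) u0
               + QF cP1 (- K - L - 1) L u0 = 0) ->
  is_derive (fun u => sumZ2 (fun k l => term cP czero cos (IZR k) (IZR l) u)) u0 0.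
Proof.
  intros Hcoef Hcoef2 Hpos0 Hpos2 HP HP1.
  destruct cos_oscillator as [D0 [D1 [B0 [B1 [B2 _]]]]].
  assert (Hzero : forall u i, is_derive (czero i) u (czero i u))
    by (intros; unfold czero; auto_derive; auto).
  assert (Hall : locally u0 (fun u => forall i, (i <= 5)%nat ->
    is_derive (cP i) u (cP1 i u) /\ is_derive (cP1 i) u (cP2 i u) /\
    is_derive (czero i) u (czero i u) /\ is_derive (czero i) u (czero i u))).
  { revert Hcoef. apply filter_imp. intros u H i Hi. destruct (H i Hi) as [H1 H2].
    exact (conj H1 (conj H2 (conj (Hzero u i) (Hzero u i)))). }
  assert (Hall2 : forall i, (i <= 5)%nat -> ex_derive (cP2 i) u0 /\ ex_derive (czero i) u0)
    by (intros i Hi; split; [auto | eexists; apply Hzero]).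
  pose proof (is_derive_gaussian_sum cP cP1 cP2 czero czero czero cos _ _ u0
                B0 B1 B2 Hall Hall2 Hpos0 Hpos2 D0 D1) as D.
  rewrite (theta_type_sum_zero cP cP1 cos _ u0 a b
             (term1_dominated cP cP1 cP2 czero czero czero cos _ _ u0 B0 B1 B2 Hall Hall2 Hpos0 Hpos2)
             HP HP1) in D.
  exact D.
Qed.

Lemma hat_type_critical (cP cP1 cP2 cp cp1 cp2 : nat -> R -> R) psi psi1 psi2 u0 a :
  oscillator psi psi1 psi2 ->
  locally u0 (fun u => forall i, (i <= 5)%nat ->
    is_derive (cP i) u (cP1 i u) /\ is_derive (cP1 i) u (cP2 i u) /\
    is_derive (cp i) u (cp1 i u) /\ is_derive (cp1 i) u (cp2 i u)) ->
  (forall i, (i <= 5)%nat -> ex_derive (cP2 i) u0 /\ ex_derive (cp2 i) u0) ->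
  0 < cP 0%nat u0 - Rabs (cP 1%nat u0) / 2 -> 0 < cP 2%nat u0 - Rabs (cP 1%nat u0) / 2 ->
  (forall K L, QF cP K L u0 = a * (K ^ 2 + K * L + L ^ 2)) ->
  (forall K L, QF cp K L u0 = 2 * PI / 3 * (K - L)) ->
  (forall K L, QF cP1 K L u0 + QF cP1 (- L) (- K) u0 + QF cP1 (- K) (K + L) u0
               + QF cP1 (- (K + L)) K u0 + QF cP1 L (- L - K) u0 + QF cP1 (L + K) (- L) u0 = 0) ->
  (forall K L, QF cp1 K L u0 + QF cp1 (- L) (- K) u0 + QF cp1 (- K) (K + L) u0
               + QF cp1 (- (K + L)) K u0 + QF cp1 L (- L - K) u0 + QF cp1 (L + K) (- L) u0 = 0) ->
  is_derive (fun u => sumZ2 (fun k l => term cP cp psi (IZR k) (IZR l) u)) u0 0.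
Proof.
  intros [D0 [D1 [B0 [B1 [B2 [Per0 Per1]]]]]] Hcoef Hcoef2 Hpos0 Hpos2 HP Hph HP1 Hph1.
  pose proof (is_derive_gaussian_sum cP cP1 cP2 cp cp1 cp2 psi psi1 psi2 u0
                B0 B1 B2 Hcoef Hcoef2 Hpos0 Hpos2 D0 D1) as D.
  rewrite (hat_type_sum_zero cP cP1 cp cp1 psi psi1 u0 a
             (term1_dominated cP cP1 cP2 cp cp1 cp2 psi psi1 psi2 u0 B0 B1 B2 Hcoef Hcoef2 Hpos0 Hpos2)
             Per0 Per1 HP Hph HP1 Hph1) in D.
  exact D.
Qed.

Lemma sqrt3_gt : 1.6 < sqrt 3.
Proof. rewrite <- (sqrt_square 1.6) by lra. apply sqrt_lt_1; lra. Qed.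

Lemma half_sqrt3_sq : (sqrt 3 / 2) ^ 2 = 3 / 4.
Proof.
  replace ((sqrt 3 / 2) ^ 2) with (sqrt 3 * sqrt 3 / 4) by field.
  rewrite sqrt_sqrt by lra. field.
Qed.

Definition hex_scale (alpha : R) : R := PI * alpha / (sqrt 3 / 2).

Lemma hex_scale_pos alpha : 0 < alpha -> 0 < hex_scale alpha.
Proof.
  intros Ha. pose proof sqrt3_gt. pose proof PI_RGT_0.
  apply Rdiv_lt_0_compat; nra.
Qed.

Definition thetaX_coef (alpha : R) (i : nat) (x : R) : R :=
  match i with 0 => hex_scale alpha | 1 => 2 * x * hex_scale alpha
  | 2 => (x ^ 2 + 3 / 4) * hex_scale alpha | 3 => hex_scale alpha
  | 4 => (x + 1 / 2) * hex_scale alpha | 5 => hex_scale alpha / 3 | _ => 0 end.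
Definition thetaX_coef1 (alpha : R) (i : nat) (x : R) : R :=
  match i with 1 => 2 * hex_scale alpha | 2 => 2 * x * hex_scale alpha | 4 => hex_scale alpha
  | _ => 0 end.
Definition thetaX_coef2 (alpha : R) (i : nat) (x : R) : R :=
  match i with 2 => 2 * hex_scale alpha | _ => 0 end.

Lemma thetaX_as_sum alpha x :
  Theta_b alpha x (sqrt 3 / 2) = sumZ2 (fun k l => term (thetaX_coef alpha) czero cos (IZR k) (IZR l) x).
Proof.
  unfold Theta_b, theta. apply sumZ2_ext. intros k l. unfold term. rewrite QF_czero, cos_0, Rmult_1_r.
  f_equal. unfold b1, b2. rewrite half_sqrt3_sq. unfold QF, thetaX_coef, hex_scale.
  pose proof sqrt3_gt. field. lra.
Qed.

Lemma thetaX_critical alpha : 0 < alpha ->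
  is_derive (fun x => Theta_b alpha x (sqrt 3 / 2)) (1 / 2) 0.
Proof.
  intros Ha. pose proof (hex_scale_pos alpha Ha).
  apply (is_derive_ext _ _ _ _ (fun x => eq_sym (thetaX_as_sum alpha x))).
  apply (theta_type_critical _ (thetaX_coef1 alpha) (thetaX_coef2 alpha) _ (hex_scale alpha) (hex_scale alpha / 3)).
  - apply filter_forall. intro u. unfold thetaX_coef, thetaX_coef1, thetaX_coef2.
    intros i Hi; destruct i as [|[|[|[|[|[|i]]]]]]; [..|lia]; simpl; split; auto_derive; auto; ring.
  - unfold thetaX_coef2. intros i Hi; destruct i as [|[|[|[|[|[|i]]]]]]; [..|lia]; simpl; auto_derive; auto.
  - simpl. rewrite Rabs_pos_eq; lra.
  - simpl. rewrite Rabs_pos_eq; lra.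
  - intros K L. unfold QF, thetaX_coef. field.
  - intros K L. unfold QF, thetaX_coef1. field.
Qed.

Lemma half_sqrt3_pow4 : (sqrt 3 / 2) ^ 4 = 9 / 16.
Proof. replace ((sqrt 3 / 2) ^ 4) with (((sqrt 3 / 2) ^ 2) ^ 2) by ring. rewrite half_sqrt3_sq. field. Qed.

(* The y-line is only considered for y > 0, which holds near y0. *)
Lemma near_half_sqrt3_pos : locally (sqrt 3 / 2) (fun u => 0 < u).
Proof.
  pose proof sqrt3_gt. assert (Hp : 0 < 1 / 2) by lra.
  exists (mkposreal _ Hp). intros u Hu. unfold ball in Hu; simpl in Hu.
  unfold AbsRing_ball, abs, minus, plus, opp in Hu; simpl in Hu.
  unfold Rabs in Hu; destruct Rcase_abs in Hu; lra.
Qed.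

Definition thetaY_coef (alpha : R) (i : nat) (y : R) : R :=
  match i with 0 | 1 | 3 => PI * alpha / y | 2 | 4 => PI * alpha / y * (1 / 4 + y ^ 2)
  | 5 => PI * alpha / y * (y ^ 2 / 4 + 1 / 8 + 1 / (64 * y ^ 2)) | _ => 0 end.
Definition thetaY_coef1 (alpha : R) (i : nat) (y : R) : R :=
  match i with 0 | 1 | 3 => - PI * alpha / y ^ 2 | 2 | 4 => PI * alpha - PI * alpha / (4 * y ^ 2)
  | 5 => PI * alpha * (1 / 4 - 1 / (8 * y ^ 2) - 3 / (64 * y ^ 4)) | _ => 0 end.
Definition thetaY_coef2 (alpha : R) (i : nat) (y : R) : R :=
  match i with 0 | 1 | 3 => 2 * PI * alpha / y ^ 3 | 2 | 4 => PI * alpha / (2 * y ^ 3)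
  | 5 => PI * alpha * (1 / (4 * y ^ 3) + 3 / (16 * y ^ 5)) | _ => 0 end.

Lemma thetaY_as_sum alpha y : 0 < y ->
  Theta_b alpha (1 / 2) y = sumZ2 (fun k l => term (thetaY_coef alpha) czero cos (IZR k) (IZR l) y).
Proof.
  intros Hy. unfold Theta_b, theta. apply sumZ2_ext. intros k l.
  unfold term. rewrite QF_czero, cos_0, Rmult_1_r.
  f_equal. unfold b1, b2, QF, thetaY_coef. field. lra.
Qed.

Lemma thetaY_critical alpha : 0 < alpha ->
  is_derive (fun y => Theta_b alpha (1 / 2) y) (sqrt 3 / 2) 0.
Proof.
  intros Ha. pose proof sqrt3_gt. pose proof PI_RGT_0.
  assert (Hpa : 0 < PI * alpha) by nra.
  assert (Hs : 0 < PI * alpha / (sqrt 3 / 2)) by (apply Rdiv_lt_0_compat; lra).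
  apply (is_derive_ext_loc _ _ _ _
    (filter_imp _ _ (fun y Hy => eq_sym (thetaY_as_sum alpha y Hy)) near_half_sqrt3_pos)).
  apply (theta_type_critical _ (thetaY_coef1 alpha) (thetaY_coef2 alpha) _ (hex_scale alpha) (hex_scale alpha / 3)).
  - generalize near_half_sqrt3_pos. apply filter_imp. intros u Hu. cbv beta.
    intros i Hi; destruct i as [|[|[|[|[|[|i]]]]]]; [..|lia]; unfold thetaY_coef, thetaY_coef1, thetaY_coef2; simpl; split; auto_derive; repeat split;
      try (field; repeat split); apply Rgt_not_eq; repeat apply Rmult_lt_0_compat; lra.
  - intros i Hi; destruct i as [|[|[|[|[|[|i]]]]]]; [..|lia]; unfold thetaY_coef2; simpl; auto_derive; repeat split;
      apply Rgt_not_eq; repeat apply Rmult_lt_0_compat; lra.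
  - cbn [thetaY_coef]. rewrite Rabs_pos_eq; lra.
  - cbn [thetaY_coef]. rewrite half_sqrt3_sq, Rabs_pos_eq; lra.
  - intros K L. unfold QF, thetaY_coef, hex_scale. rewrite half_sqrt3_sq. field. lra.
  - intros K L. unfold QF, thetaY_coef1. rewrite half_sqrt3_sq, half_sqrt3_pow4. field.
Qed.

Lemma is_derive_pairC (F1 F2 : R -> R) x l1 l2 :
  is_derive F1 x l1 -> is_derive F2 x l2 -> is_derive (fun u => (F1 u, F2 u) : C) x ((l1, l2) : C).
Proof.
  intros H1 H2. unfold is_derive in *.
  apply (filterdiff_comp'_2 F1 F2
           (fun a b => (a, b) : prod_NormedModule R_AbsRing R_NormedModule R_NormedModule)
           x _ _ (fun a b => (a, b)) H1 H2).
  apply (filterdiff_ext_lin _ (fun t => t)).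
  - apply filterdiff_ext with (fun t => t); [intros [a b]; reflexivity | apply filterdiff_id].
  - intros [a b]; reflexivity.
Qed.

Definition hatX_coef (alpha : R) (i : nat) (x : R) : R :=
  match i with 0 => hex_scale alpha | 1 => 2 * x * hex_scale alpha
  | 2 => (x ^ 2 + 3 / 4) * hex_scale alpha | _ => 0 end.
Definition hatX_coef1 (alpha : R) (i : nat) (x : R) : R :=
  match i with 1 => 2 * hex_scale alpha | 2 => 2 * x * hex_scale alpha | _ => 0 end.
Definition hatX_coef2 (alpha : R) (i : nat) (x : R) : R :=
  match i with 2 => 2 * hex_scale alpha | _ => 0 end.
Definition hatX_phase (i : nat) (x : R) : R :=
  match i with 3 => 2 * PI / 3 | 4 => - PI + 2 * PI * x / 3 | _ => 0 end.
Definition hatX_phase1 (i : nat) (x : R) : R :=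
  match i with 4 => 2 * PI / 3 | _ => 0 end.

Lemma hatX_as_sum alpha x :
  ThetaHat_b alpha x (sqrt 3 / 2) =
  (sumZ2 (fun k l => term (hatX_coef alpha) hatX_phase cos (IZR k) (IZR l) x),
   sumZ2 (fun k l => term (hatX_coef alpha) hatX_phase sin (IZR k) (IZR l) x)).
Proof.
  pose proof sqrt3_gt.
  unfold ThetaHat_b, thetahat. f_equal; apply sumZ2_ext; intros k l; unfold term, gaussw.
  all: f_equal; f_equal; unfold b1, b2; rewrite ?half_sqrt3_sq;
    unfold QF, hatX_coef, hatX_phase, hex_scale; field; lra.
Qed.

Lemma thetahatX_critical alpha : 0 < alpha ->
  is_derive (fun x => ThetaHat_b alpha x (sqrt 3 / 2)) (1 / 2) (0 : C).
Proof.
  intros Ha. pose proof (hex_scale_pos alpha Ha).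
  assert (Hpart : forall psi psi1 psi2, oscillator psi psi1 psi2 ->
    is_derive (fun x => sumZ2 (fun k l => term (hatX_coef alpha) hatX_phase psi (IZR k) (IZR l) x))
      (1 / 2) 0).
  { intros psi psi1 psi2 Hosc.
    apply (hat_type_critical _ (hatX_coef1 alpha) (hatX_coef2 alpha) _ hatX_phase1 czero
             psi psi1 psi2 _ (hex_scale alpha) Hosc).
    - apply filter_forall. intros u i Hi. destruct i as [|[|[|[|[|[|i]]]]]]; [..|lia];
        unfold hatX_coef, hatX_coef1, hatX_coef2, hatX_phase, hatX_phase1, czero; simpl;
        refine (conj _ (conj _ (conj _ _))); auto_derive; auto; field.
    - intros i Hi. destruct i as [|[|[|[|[|[|i]]]]]]; [..|lia];
        unfold hatX_coef2, czero; simpl; split; auto_derive; auto.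
    - simpl. rewrite Rabs_pos_eq; lra.
    - simpl. rewrite Rabs_pos_eq; lra.
    - intros K L. unfold QF, hatX_coef. field.
    - intros K L. unfold QF, hatX_phase. field.
    - intros K L. unfold QF, hatX_coef1. field.
    - intros K L. unfold QF, hatX_phase1. field. }
  apply (is_derive_ext _ _ _ _ (fun x => eq_sym (hatX_as_sum alpha x))).
  apply is_derive_pairC; [apply (Hpart _ _ _ cos_oscillator) | apply (Hpart _ _ _ sin_oscillator)].
Qed.

Definition hatY_coef (alpha : R) (i : nat) (y : R) : R :=
  match i with 0 | 1 => PI * alpha / y | 2 => PI * alpha / y * (1 / 4 + y ^ 2) | _ => 0 end.
Definition hatY_coef1 (alpha : R) (i : nat) (y : R) : R :=
  match i with 0 | 1 => - PI * alpha / y ^ 2 | 2 => PI * alpha - PI * alpha / (4 * y ^ 2) | _ => 0 end.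
Definition hatY_coef2 (alpha : R) (i : nat) (y : R) : R :=
  match i with 0 | 1 => 2 * PI * alpha / y ^ 3 | 2 => PI * alpha / (2 * y ^ 3) | _ => 0 end.
Definition hatY_phase (i : nat) (y : R) : R :=
  match i with 3 => PI - PI / (4 * y ^ 2) | 4 => - PI / 2 - PI / (8 * y ^ 2) | _ => 0 end.
Definition hatY_phase1 (i : nat) (y : R) : R :=
  match i with 3 => PI / (2 * y ^ 3) | 4 => PI / (4 * y ^ 3) | _ => 0 end.
Definition hatY_phase2 (i : nat) (y : R) : R :=
  match i with 3 => - 3 * PI / (2 * y ^ 4) | 4 => - 3 * PI / (4 * y ^ 4) | _ => 0 end.

Lemma hatY_as_sum alpha y : 0 < y ->
  ThetaHat_b alpha (1 / 2) y =
  (sumZ2 (fun k l => term (hatY_coef alpha) hatY_phase cos (IZR k) (IZR l) y),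
   sumZ2 (fun k l => term (hatY_coef alpha) hatY_phase sin (IZR k) (IZR l) y)).
Proof.
  intros Hy.
  unfold ThetaHat_b, thetahat. f_equal; apply sumZ2_ext; intros k l; unfold term, gaussw.
  all: f_equal; f_equal; unfold b1, b2, QF, hatY_coef, hatY_phase; field; lra.
Qed.

Lemma thetahatY_critical alpha : 0 < alpha ->
  is_derive (fun y => ThetaHat_b alpha (1 / 2) y) (sqrt 3 / 2) (0 : C).
Proof.
  intros Ha. pose proof sqrt3_gt. pose proof PI_RGT_0.
  assert (Hpa : 0 < PI * alpha) by nra.
  assert (Hs : 0 < PI * alpha / (sqrt 3 / 2)) by (apply Rdiv_lt_0_compat; lra).
  assert (Hpart : forall psi psi1 psi2, oscillator psi psi1 psi2 ->
    is_derive (fun y => sumZ2 (fun k l => term (hatY_coef alpha) hatY_phase psi (IZR k) (IZR l) y))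
      (sqrt 3 / 2) 0).
  { intros psi psi1 psi2 Hosc.
    apply (hat_type_critical _ (hatY_coef1 alpha) (hatY_coef2 alpha) _ hatY_phase1 hatY_phase2
             psi psi1 psi2 _ (hex_scale alpha) Hosc).
    - generalize near_half_sqrt3_pos. apply filter_imp. intros u Hu i Hi.
      destruct i as [|[|[|[|[|[|i]]]]]]; [..|lia];
        unfold hatY_coef, hatY_coef1, hatY_coef2, hatY_phase, hatY_phase1, hatY_phase2; simpl;
        refine (conj _ (conj _ (conj _ _))); auto_derive; repeat split;
        try (field; repeat split); apply Rgt_not_eq; repeat apply Rmult_lt_0_compat; lra.
    - intros i Hi. destruct i as [|[|[|[|[|[|i]]]]]]; [..|lia];
        unfold hatY_coef2, hatY_phase2; simpl; split; auto_derive; repeat split;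
        apply Rgt_not_eq; repeat apply Rmult_lt_0_compat; lra.
    - cbn [hatY_coef]. rewrite Rabs_pos_eq; lra.
    - cbn [hatY_coef]. rewrite half_sqrt3_sq, Rabs_pos_eq; lra.
    - intros K L. unfold QF, hatY_coef, hex_scale. rewrite half_sqrt3_sq. field. lra.
    - intros K L. unfold QF, hatY_phase. rewrite half_sqrt3_sq. field.
    - intros K L. unfold QF, hatY_coef1. rewrite half_sqrt3_sq. field.
    - intros K L. unfold QF, hatY_phase1. field. lra. }
  apply (is_derive_ext_loc _ _ _ _
    (filter_imp _ _ (fun y Hy => eq_sym (hatY_as_sum alpha y Hy)) near_half_sqrt3_pos)).
  apply is_derive_pairC; [apply (Hpart _ _ _ cos_oscillator) | apply (Hpart _ _ _ sin_oscillator)].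
Qed.

Theorem lemma4p1 (alpha : R) (Halpha : 0 < alpha) :
  is_derive (fun x => Theta_b alpha x (sqrt 3 / 2)) (1 / 2) 0 /\
  is_derive (fun y => Theta_b alpha (1 / 2) y) (sqrt 3 / 2) 0 /\
  is_derive (fun x => ThetaHat_b alpha x (sqrt 3 / 2)) (1 / 2) (0 : C) /\
  is_derive (fun y => ThetaHat_b alpha (1 / 2) y) (sqrt 3 / 2) (0 : C).
Proof.
  split; [|split; [|split]].
  - exact (thetaX_critical alpha Halpha).
  - exact (thetaY_critical alpha Halpha).
  - exact (thetahatX_critical alpha Halpha).
  - exact (thetahatY_critical alpha Halpha).
Qed.
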